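(* There exist 4-GDDs of types $14^6 m^1$ for each $m\in\{8,11,17,20,23,26,29,32\}$, and 4-GDDs of types $14^9 m^1$ for each $m\in\{11,17,20,23,26,29,32,38,41,44,47,50,53\}$.
   Context: For a set $K$ of positive integers, a $K$-GDD (group divisible design) is a triple $(V,\mathcal G,\mathcal B)$ where $V$ is a finite set, $\mathcal G$ is a partition of $V$ into subsets called groups, $\mathcal B$ is a nonempty collection of subsets of $V$ (blocks) with sizes in $K$, such that every pair of points from distinct groups lies in exactly one block and no pair of points from the same group lies in any block. A $k$-GDD means a $\{k\}$-GDD. Type $g^u m^1$ means $u$ groups of size $g$ and one group of size $m$. *)

From mathcomp Require Import all_boot.
Set Implicit Arguments. Unset Strict Implicit. Unset Printing Implicit Defensive.

Definition is_GDD (T : finType) (K : pred nat)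
  (G : {set {set T}}) (B : {set {set T}}) : Prop :=
  [/\ partition G [set: T],
      B != set0,
      (forall b, b \in B -> #|b| \in K),
      (forall x y : T, pblock G x != pblock G y ->
          exists! b, b \in B /\ x \in b /\ y \in b)
    & (forall x y : T, x != y -> pblock G x = pblock G y ->
          forall b, b \in B -> ~ (x \in b /\ y \in b))].

Definition has_type_gum (T : finType) (G : {set {set T}}) (g u m : nat) : Prop :=
  #|G| = u.+1 /\
  exists2 A, A \in G & #|A| = m /\ (forall C, C \in G -> C != A -> #|C| = g).

Definition exists_kGDD_type (k g u m : nat) : Prop :=
  exists (T : finType) (G B : {set {set T}}),
    is_GDD (pred1 k) G B /\ has_type_gum G g u m.

(* Each design is the orbit of a few base blocks under a cyclic group Z_q that rotates
   runs of q consecutive points among those of the groups of size 14 and fixes the points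
   of the group of size m.  That a set of blocks is a 4-GDD is a finite check: every block
   meets each group at most once, and for every point x the points sharing a block with x,
   counted with multiplicity, are exactly the points outside the group of x. *)

From mathcomp Require Import all_boot.
Set Implicit Arguments. Unset Strict Implicit. Unset Printing Implicit Defensive.

Section Fibres.

Variables (T : finType) (rT : eqType) (f : T -> rT).

Local Notation G := (preim_partition f [set: T]).

Lemma eq_pblock_preim_partition x y : (pblock G x == pblock G y) = (f x == f y).
Proof.
have [/eqP covG tiG _] := and3P (preim_partitionP f [set: T]).
have eqf : {in [set: T] & &, equivalence_rel (fun x y => f x == f y)}.
  by move=> ? ? ? _ _ _; split=> // /eqP->.
by rewrite eq_pblock ?covG // (pblock_equivalence_partition eqf) ?inE.
Qed.

Lemma is_GDD_preim_partition k (B : {set {set T}}) :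
    B != set0 -> (forall b, b \in B -> #|b| = k) ->
    (forall b, b \in B -> {in b &, injective f}) ->
    (forall x y, f x != f y -> exists! b, b \in B /\ x \in b /\ y \in b) ->
  is_GDD (pred1 k) G B.
Proof.
move=> B0 cardB injB pairB; split=> //.
- exact: preim_partitionP.
- by move=> b /cardB ->; rewrite inE.
- by move=> x y; rewrite eq_pblock_preim_partition => /pairB.
- move=> x y xy /eqP; rewrite eq_pblock_preim_partition => /eqP fxy b Bb [xb yb].
  by rewrite (injB b Bb x y xb yb fxy) eqxx in xy.
Qed.

End Fibres.

Section FibresOfSurjection.

Variables (T rT : finType) (f : T -> rT).
Hypothesis f_onto : forall j, exists x, f x = j.

Local Notation fibre j := (f @^-1: [set j]).

Lemma fibre_inj : injective (fun j => fibre j).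
Proof.
move=> i j /setP eq_ij; have [x fx] := f_onto i.
by have := eq_ij x; rewrite !inE fx eqxx => /esym /eqP.
Qed.

Lemma preim_partition_onto : preim_partition f [set: T] = [set fibre j | j : rT].
Proof.
apply/setP=> S; apply/imsetP/imsetP=> [[x _ ->]|[j _ ->]].
  by exists (f x) => //; apply/setP=> y; rewrite !inE eq_sym.
have [x fx] := f_onto j; exists x => //; apply/setP=> y.
by rewrite !inE fx eq_sym.
Qed.

End FibresOfSurjection.

Lemma has_type_gum_preim_partition (T : finType) g u m (f : T -> 'I_u.+1) :
    0 < g -> 0 < m -> #|f @^-1: [set ord_max]| = m ->
    (forall j, j != ord_max -> #|f @^-1: [set j]| = g) ->
  has_type_gum (preim_partition f [set: T]) g u m.
Proof.
move=> g_gt0 m_gt0 card_max card_j.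
have f_onto j : exists x, f x = j.
  have : 0 < #|f @^-1: [set j]|.
    by have [->|/card_j->] := eqVneq j ord_max; rewrite ?card_max.
  by rewrite card_gt0 => /set0Pn [x]; rewrite !inE => /eqP; exists x.
rewrite preim_partition_onto //; split.
  by rewrite card_imset ?cardsT ?card_ord //; apply: fibre_inj.
exists (f @^-1: [set ord_max]); first exact: imset_f.
split=> // _ /imsetP [j _ ->] neq_j; apply: card_j.
by apply: contraNneq neq_j => ->.
Qed.

Lemma count_iota_range a k n :
  a + k <= n -> count (fun p => a <= p < a + k) (iota 0 n) = k.
Proof.
move=> akn; rewrite -(subnKC akn) -addnA !iotaD !count_cat add0n.
rewrite (@eq_in_count _ _ pred0) => [|p]; last by rewrite mem_iota => /andP[_ /ltn_geF->].
rewrite (@eq_in_count _ _ predT (iota a k)) => [|p]; last by rewrite mem_iota.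
rewrite (@eq_in_count _ _ pred0 (iota (a + k) _)) => [|p]; last first.
  by rewrite mem_iota => /andP[/leq_gtF->]; rewrite andbF.
by rewrite !count_pred0 count_predT size_iota addn0.
Qed.

Section GroupIndex.

Variables g u m : nat.
Hypothesis g_gt0 : 0 < g.

Definition group_index (p : nat) : nat := if p < g * u then p %/ g else u.

Lemma group_index_le p : group_index p <= u.
Proof.
by rewrite /group_index; case: ltnP => // lt_p; rewrite ltnW // ltn_divLR // mulnC.
Qed.

Lemma count_group_index j : j <= u ->
  count (fun p => group_index p == j) (iota 0 (g * u + m)) = if j < u then g else m.
Proof.
move=> le_ju; case: ltnP => [lt_ju|le_uj]; last first.
  have -> : j = u by apply/eqP; rewrite eqn_leq le_ju.
  rewrite -[RHS](count_iota_range (leqnn (g * u + m))).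
  apply: eq_in_count => p; rewrite mem_iota add0n => /andP[_ ->].
  rewrite /group_index andbT; case: ltnP => [lt_p|_]; last exact: eqxx.
  by rewrite ltn_eqF // ltn_divLR // mulnC.
have jgu : g * j + g <= g * u + m.
  by rewrite addnC -mulnS (leq_trans _ (leq_addr m _)) // leq_mul2l lt_ju orbT.
rewrite -[RHS](count_iota_range jgu); apply: eq_in_count => p _.
rewrite /group_index addnC -mulnS; case: ltnP => [lt_p|le_p].
  by rewrite eqn_leq leq_divRL // -ltnS ltn_divLR // andbC ![_ * g]mulnC.
rewrite eq_sym (ltn_eqF lt_ju) (leq_gtF (leq_trans _ le_p)) ?andbF //.
by rewrite leq_mul2l lt_ju orbT.
Qed.

End GroupIndex.

Lemma inj_in_uniq_map (T1 : eqType) (T2 : eqType) (f : T1 -> T2) (s : seq T1) :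
  uniq (map f s) -> {in s &, injective f}.
Proof.
elim: s => //= a s IH /andP[fa_s /IH {}IH] x y.
rewrite !in_cons => /predU1P[->|xs] /predU1P[->|ys] // fxy.
- by move: fa_s; rewrite fxy map_f.
- by move: fa_s; rewrite -fxy map_f.
- exact: IH.
Qed.

Section Neighbours.

Variable T : eqType.
Implicit Types (x y : T) (b c : seq T) (bs : seq (seq T)).

Definition neighbours x bs := flatten [seq rem x b | b <- bs & x \in b].

Lemma neighbours_cons x b bs :
  neighbours x (b :: bs) = if x \in b then rem x b ++ neighbours x bs else neighbours x bs.
Proof. by rewrite /neighbours /=; case: ifP. Qed.

Lemma mem_rem_neq x y b : y != x -> x \in b -> (y \in rem x b) = (y \in b).
Proof. by move=> yx xb; rewrite (perm_mem (perm_to_rem xb)) in_cons (negbTE yx). Qed.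

Lemma mem_neighbours x y bs :
  y != x -> (y \in neighbours x bs) = has (fun b => (x \in b) && (y \in b)) bs.
Proof.
move=> yx; elim: bs => //= b bs IH; rewrite neighbours_cons.
by case: ifP => xb /=; rewrite ?mem_cat ?mem_rem_neq ?IH.
Qed.

Lemma uniq_neighbours_block x y bs b c :
    y != x -> uniq (neighbours x bs) -> b \in bs -> c \in bs ->
    x \in b -> y \in b -> x \in c -> y \in c -> b = c.
Proof.
move=> yx; elim: bs => //= d bs IH; rewrite neighbours_cons.
case: ifPn => [xd|xNd] U; last first.
  rewrite !in_cons => /predU1P[->|bs_b]; first by move=> _ /(negP xNd).
  by move=> /predU1P[->|bs_c]; [move=> _ _ /(negP xNd) | apply: IH].
move: U; rewrite cat_uniq => /and3P[_ disj U].
have shared e : e \in bs -> x \in e -> y \in e -> y \in rem x d -> False.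
  move=> bs_e xe ye yd; case/hasP: disj; exists y => //.
  by rewrite mem_neighbours //; apply/hasP; exists e; rewrite ?xe.
rewrite !in_cons => /predU1P[->|bs_b] /predU1P[->|bs_c] xb yb xc yc //.
- by case: (shared c); rewrite ?mem_rem_neq.
- by case: (shared b); rewrite ?mem_rem_neq.
- exact: IH.
Qed.

End Neighbours.

Lemma card_set_ord n (P : pred nat) : #|[set x : 'I_n | P x]| = count P (iota 0 n).
Proof.
rewrite -val_enum_ord count_map cardsE cardE /enum_mem size_filter count_filter.
by apply: eq_count => x; rewrite /= andbT.
Qed.

Lemma count_mem_iota n (b : seq nat) :
  uniq b -> all (gtn n) b -> count (mem b) (iota 0 n) = size b.
Proof.
move=> ub /allP bn; rewrite -size_filter; apply/perm_size/uniq_perm => //.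
  exact: filter_uniq (iota_uniq 0 n).
by move=> y; rewrite mem_filter mem_iota /=; case: (boolP (y \in b)) => // /bn.
Qed.

Definition gdd_certificate (g u m : nat) (bs : seq (seq nat)) : bool :=
  let n := g * u + m in
  let grp := group_index g u in
  [&& 0 < g, 0 < m, bs != [::],
      all (fun b => [&& size b == 4, uniq (map grp b) & all (gtn n) b]) bs &
      all (fun x => sort leq (neighbours x bs) == [seq y <- iota 0 n | grp y != grp x])
          (iota 0 n)].

Section Certificate.

Variables (g u m : nat) (bs : seq (seq nat)).
Hypothesis cert : gdd_certificate g u m bs.

Local Notation n := (g * u + m).

Definition group_of (x : 'I_n) : 'I_u.+1 := inord (group_index g u x).

Definition block_set (b : seq nat) : {set 'I_n} := [set x | val x \in b].

Let g_gt0 : 0 < g. Proof. by case/and5P: cert. Qed.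

Lemma eq_group_of x y :
  (group_of x == group_of y) = (group_index g u x == group_index g u y).
Proof. by rewrite -val_eqE /= !inordK ?ltnS ?group_index_le. Qed.

Lemma card_fibre_group_of j :
  #|group_of @^-1: [set j]| = if j < u then g else m.
Proof.
rewrite -(count_group_index m g_gt0 (ltn_ord j : j <= u)) -card_set_ord.
by apply: eq_card => x; rewrite !inE -val_eqE /= inordK ?ltnS ?group_index_le.
Qed.

Local Notation blocks := [set S in map block_set bs].

Let block_cert b :
  b \in bs -> [&& size b == 4, uniq (map (group_index g u) b) & all (gtn n) b].
Proof. by case/and5P: cert => _ _ _ /allP + _; apply. Qed.

Let neighbours_cert (x : 'I_n) :
  perm_eq (neighbours (val x) bs) [seq y <- iota 0 n | group_index g u y != group_index g u x].
Proof.
case/and5P: cert => _ _ _ _ /allP /(_ x); rewrite mem_iota ltn_ord => /(_ isT) /eqP <-.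
by rewrite perm_sym perm_sort.
Qed.

Lemma card_block_set b : b \in bs -> #|block_set b| = 4.
Proof.
case/block_cert/and3P => /eqP <- /map_uniq ub bn.
by rewrite card_set_ord count_mem_iota.
Qed.

Lemma group_of_inj_block b : b \in bs -> {in block_set b &, injective group_of}.
Proof.
case/block_cert/and3P => _ /inj_in_uniq_map inj_b _ x y; rewrite !inE => xb yb.
by move/eqP; rewrite eq_group_of => /eqP /(inj_b _ _ xb yb) /val_inj.
Qed.

Lemma unique_block x y :
  group_of x != group_of y -> exists! S, S \in blocks /\ x \in S /\ y \in S.
Proof.
rewrite eq_group_of => xy.
have yx : val y != val x by apply: contraNneq xy => /val_inj ->.
have uniq_nx : uniq (neighbours (val x) bs).
  by rewrite (perm_uniq (neighbours_cert x)) filter_uniq ?iota_uniq.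
have : val y \in neighbours (val x) bs.
  by rewrite (perm_mem (neighbours_cert x)) mem_filter mem_iota ltn_ord eq_sym xy.
rewrite mem_neighbours // => /hasP [b bs_b /andP[xb yb]].
exists (block_set b); split; first by rewrite inE map_f // !inE xb yb.
move=> _ [/[!inE] /mapP [c bs_c ->]]; rewrite /block_set !inE => -[xc yc].
by rewrite (uniq_neighbours_block yx uniq_nx bs_b bs_c xb yb xc yc).
Qed.

Lemma exists_kGDD_type_of_certificate : exists_kGDD_type 4 g u m.
Proof.
have [_ m_gt0 bs_nil _ _] := and5P cert.
exists 'I_n, (preim_partition group_of [set: 'I_n]), blocks; split.
  apply: is_GDD_preim_partition => [|S|S|x y]; last exact: unique_block.
  - have [b bs_b] : exists b, b \in bs.
      by case: bs bs_nil => // b ? _; exists b; rewrite mem_head.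
    by apply/set0Pn; exists (block_set b); rewrite inE map_f.
  - by rewrite inE => /mapP [b /card_block_set ? ->].
  - by rewrite inE => /mapP [b /group_of_inj_block ? ->].
apply: has_type_gum_preim_partition => // [|j neq_j]; rewrite card_fibre_group_of.
  by rewrite ltnn.
rewrite ifT // ltn_neqAle -ltnS ltn_ord andbT.
by apply: contra neq_j => /eqP ju; apply/eqP/val_inj.
Qed.

End Certificate.

Lemma exists_kGDD_types_of_certificates g u (ds : seq (nat * seq (seq nat))) :
    all (fun d => gdd_certificate g u d.1 d.2) ds ->
  forall m, m \in map fst ds -> exists_kGDD_type 4 g u m.
Proof.
move=> /allP ok m /mapP [[m' bs] /ok cert ->].
exact: exists_kGDD_type_of_certificate cert.
Qed.

Definition cyclic_shift (F q t p : nat) : nat :=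
  if p < F then p - p %% q + (p %% q + t) %% q else p.

Definition develop (F q : nat) (base : seq (seq nat)) : seq (seq nat) :=
  flatten [seq [seq map (cyclic_shift F q t) b | t <- iota 0 q] | b <- base].

(* The design of type 14^9 11^1 is developed under Z_21 in a labelling where point 3k + j
   of each run of 42 points lies in the j-th group of the run, so that Z_21 permutes the
   three groups of a run cyclically; [regroup] returns to consecutive groups. *)
Definition regroup (p : nat) : nat :=
  if p < 126 then 42 * (p %/ 42) + 14 * (p %% 42 %% 3) + p %% 42 %/ 3 else p.

Definition base_6_8 : seq (seq nat) :=
  [:: [:: 84; 29; 45; 79]; [:: 84; 0; 20; 65]; [:: 85; 3; 21; 33]; [:: 85; 44; 62; 74];
      [:: 86; 13; 48; 57]; [:: 86; 22; 39; 82]; [:: 87; 5; 15; 40]; [:: 87; 49; 64; 70];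
      [:: 88; 0; 19; 83]; [:: 88; 37; 55; 61]; [:: 89; 23; 32; 66]; [:: 89; 8; 53; 76];
      [:: 90; 10; 28; 42]; [:: 90; 15; 62; 71]; [:: 91; 22; 28; 52]; [:: 91; 6; 56; 80];
      [:: 2; 36; 65; 73]; [:: 9; 21; 42; 69]; [:: 20; 51; 62; 79]; [:: 15; 30; 43; 65];
      [:: 27; 37; 54; 79]; [:: 17; 36; 69; 80]; [:: 0; 17; 68; 72]; [:: 12; 19; 51; 77];
      [:: 9; 40; 52; 62]; [:: 16; 49; 65; 78]; [:: 4; 33; 60; 79]; [:: 24; 37; 44; 71];
      [:: 0; 28; 59; 73]; [:: 11; 36; 59; 75]; [:: 13; 14; 35; 60]; [:: 0; 14; 50; 81];
      [:: 28; 47; 68; 83]; [:: 5; 32; 43; 62]; [:: 0; 22; 40; 48]; [:: 11; 30; 53; 77];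
      [:: 1; 14; 52; 71]; [:: 3; 26; 40; 80]; [:: 5; 29; 49; 81]; [:: 14; 36; 51; 68];
      [:: 13; 24; 53; 65]; [:: 12; 14; 53; 67]; [:: 15; 31; 59; 80]].

Definition base_6_11 : seq (seq nat) :=
  [:: [:: 84; 14; 49; 65]; [:: 84; 13; 34; 78]; [:: 85; 12; 37; 46]; [:: 85; 18; 61; 80];
      [:: 86; 10; 16; 34]; [:: 86; 45; 57; 77]; [:: 87; 3; 48; 67]; [:: 87; 15; 32; 72];
      [:: 88; 6; 61; 73]; [:: 88; 17; 31; 55]; [:: 89; 31; 48; 68]; [:: 89; 5; 15; 80];
      [:: 90; 10; 43; 76]; [:: 90; 14; 40; 58]; [:: 91; 29; 59; 82]; [:: 91; 0; 23; 43];
      [:: 92; 6; 40; 64]; [:: 92; 25; 48; 77]; [:: 93; 14; 41; 56]; [:: 93; 7; 47; 81];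
      [:: 94; 5; 16; 75]; [:: 94; 28; 53; 63]; [:: 15; 40; 46; 73]; [:: 10; 23; 45; 62];
      [:: 4; 19; 40; 45]; [:: 14; 34; 55; 77]; [:: 0; 16; 32; 68]; [:: 7; 34; 46; 76];
      [:: 5; 28; 62; 77]; [:: 14; 47; 61; 75]; [:: 26; 55; 66; 76]; [:: 13; 49; 64; 75];
      [:: 0; 21; 46; 67]; [:: 9; 21; 40; 57]; [:: 9; 39; 53; 77]; [:: 27; 37; 45; 82];
      [:: 7; 25; 56; 78]; [:: 23; 31; 58; 79]; [:: 0; 22; 52; 56]; [:: 4; 32; 65; 82];
      [:: 5; 22; 31; 82]; [:: 8; 22; 37; 50]; [:: 39; 54; 67; 71]; [:: 41; 43; 66; 82];
      [:: 6; 39; 43; 65]; [:: 0; 19; 60; 73]].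

Definition base_6_17 : seq (seq nat) :=
  [:: [:: 84; 28; 68; 82]; [:: 84; 7; 27; 47]; [:: 85; 11; 21; 69]; [:: 85; 28; 42; 75];
      [:: 86; 5; 28; 53]; [:: 86; 15; 58; 77]; [:: 87; 21; 45; 68]; [:: 87; 5; 29; 79];
      [:: 88; 13; 63; 78]; [:: 88; 21; 31; 53]; [:: 89; 8; 20; 71]; [:: 89; 34; 46; 61];
      [:: 90; 36; 57; 75]; [:: 90; 9; 14; 42]; [:: 91; 22; 38; 66]; [:: 91; 10; 51; 83];
      [:: 92; 18; 48; 60]; [:: 92; 2; 36; 77]; [:: 93; 14; 34; 82]; [:: 93; 1; 54; 58];
      [:: 94; 0; 14; 78]; [:: 94; 38; 48; 56]; [:: 95; 0; 35; 59]; [:: 95; 14; 43; 72];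
      [:: 96; 6; 33; 76]; [:: 96; 27; 54; 59]; [:: 97; 25; 62; 71]; [:: 97; 4; 36; 53];
      [:: 98; 4; 40; 56]; [:: 98; 14; 49; 71]; [:: 99; 51; 57; 82]; [:: 99; 0; 15; 29];
      [:: 100; 0; 45; 61]; [:: 100; 15; 28; 74]; [:: 0; 39; 52; 76]; [:: 5; 23; 48; 76];
      [:: 37; 46; 59; 81]; [:: 10; 26; 61; 78]; [:: 26; 37; 43; 82]; [:: 8; 25; 64; 80];
      [:: 16; 33; 52; 66]; [:: 0; 27; 28; 46]; [:: 32; 47; 57; 81]; [:: 9; 20; 39; 46];
      [:: 5; 55; 58; 71]; [:: 24; 33; 64; 71]; [:: 2; 24; 28; 62]; [:: 12; 42; 67; 79];
      [:: 9; 18; 40; 63]; [:: 14; 35; 51; 77]; [:: 3; 24; 36; 65]; [:: 2; 44; 65; 71]].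

Definition base_6_20 : seq (seq nat) :=
  [:: [:: 84; 6; 39; 78]; [:: 84; 21; 43; 60]; [:: 85; 6; 17; 82]; [:: 85; 30; 42; 57];
      [:: 86; 31; 62; 82]; [:: 86; 2; 26; 55]; [:: 87; 2; 41; 70]; [:: 87; 19; 45; 61];
      [:: 88; 14; 69; 73]; [:: 88; 2; 31; 52]; [:: 89; 13; 36; 53]; [:: 89; 23; 56; 71];
      [:: 90; 55; 61; 83]; [:: 90; 5; 18; 35]; [:: 91; 1; 43; 72]; [:: 91; 20; 32; 57];
      [:: 92; 9; 60; 79]; [:: 92; 16; 30; 49]; [:: 93; 22; 46; 79]; [:: 93; 2; 33; 57];
      [:: 94; 7; 21; 31]; [:: 94; 52; 62; 76]; [:: 95; 0; 22; 60]; [:: 95; 33; 43; 80];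
      [:: 96; 6; 21; 64]; [:: 96; 28; 46; 72]; [:: 97; 2; 61; 82]; [:: 97; 19; 41; 50];
      [:: 98; 14; 33; 68]; [:: 98; 8; 55; 71]; [:: 99; 17; 42; 81]; [:: 99; 1; 37; 57];
      [:: 100; 33; 59; 71]; [:: 100; 5; 14; 51]; [:: 101; 33; 55; 66]; [:: 101; 13; 25; 77];
      [:: 102; 5; 46; 67]; [:: 102; 14; 37; 72]; [:: 103; 14; 32; 82]; [:: 103; 3; 47; 66];
      [:: 5; 24; 40; 54]; [:: 5; 23; 50; 58]; [:: 16; 44; 62; 79]; [:: 22; 29; 54; 66];
      [:: 13; 31; 47; 60]; [:: 7; 35; 50; 81]; [:: 0; 17; 51; 73]; [:: 5; 21; 32; 74];
      [:: 1; 53; 67; 80]; [:: 26; 39; 57; 73]; [:: 34; 47; 56; 79]; [:: 4; 24; 30; 58];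
      [:: 13; 20; 56; 80]; [:: 20; 35; 55; 75]; [:: 11; 31; 61; 72]].

Definition base_6_23 : seq (seq nat) :=
  [:: [:: 84; 20; 37; 83]; [:: 84; 4; 53; 56]; [:: 85; 13; 25; 33]; [:: 85; 42; 69; 76];
      [:: 86; 36; 67; 77]; [:: 86; 9; 18; 52]; [:: 87; 26; 37; 77]; [:: 87; 5; 49; 69];
      [:: 88; 0; 16; 65]; [:: 88; 30; 52; 81]; [:: 89; 12; 26; 36]; [:: 89; 44; 60; 74];
      [:: 90; 11; 30; 83]; [:: 90; 23; 49; 59]; [:: 91; 8; 42; 77]; [:: 91; 15; 38; 57];
      [:: 92; 22; 40; 66]; [:: 92; 0; 55; 82]; [:: 93; 49; 57; 72]; [:: 93; 6; 17; 32];
      [:: 94; 9; 63; 83]; [:: 94; 22; 38; 50]; [:: 95; 6; 46; 77]; [:: 95; 20; 40; 61];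
      [:: 96; 0; 32; 52]; [:: 96; 14; 60; 78]; [:: 97; 5; 60; 71]; [:: 97; 26; 33; 50];
      [:: 98; 38; 43; 66]; [:: 98; 6; 14; 73]; [:: 99; 15; 60; 83]; [:: 99; 3; 38; 42];
      [:: 100; 12; 15; 82]; [:: 100; 28; 53; 64]; [:: 101; 32; 53; 57]; [:: 101; 9; 27; 73];
      [:: 102; 0; 31; 73]; [:: 102; 22; 51; 65]; [:: 103; 14; 67; 72]; [:: 103; 12; 34; 43];
      [:: 104; 4; 41; 64]; [:: 104; 16; 47; 72]; [:: 105; 39; 57; 83]; [:: 105; 7; 27; 54];
      [:: 106; 9; 34; 58]; [:: 106; 23; 45; 71]; [:: 17; 31; 47; 83]; [:: 4; 31; 65; 81];
      [:: 19; 31; 44; 76]; [:: 0; 24; 29; 58]; [:: 2; 15; 48; 69]; [:: 4; 23; 55; 60];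
      [:: 37; 52; 67; 80]; [:: 8; 15; 67; 70]; [:: 24; 37; 47; 71]; [:: 11; 26; 47; 59];
      [:: 4; 34; 61; 83]; [:: 9; 37; 51; 70]].

Definition base_6_26 : seq (seq nat) :=
  [:: [:: 84; 23; 50; 61]; [:: 84; 8; 35; 71]; [:: 85; 12; 23; 62]; [:: 85; 36; 46; 80];
      [:: 86; 54; 60; 73]; [:: 86; 1; 27; 31]; [:: 87; 16; 29; 78]; [:: 87; 0; 48; 56];
      [:: 88; 1; 15; 40]; [:: 88; 42; 61; 73]; [:: 89; 4; 40; 58]; [:: 89; 16; 49; 73];
      [:: 90; 20; 36; 64]; [:: 90; 10; 43; 79]; [:: 91; 4; 24; 78]; [:: 91; 30; 43; 56];
      [:: 92; 3; 22; 43]; [:: 92; 28; 65; 82]; [:: 93; 39; 51; 58]; [:: 93; 2; 19; 83];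
      [:: 94; 16; 30; 77]; [:: 94; 13; 45; 57]; [:: 95; 25; 43; 83]; [:: 95; 1; 39; 66];
      [:: 96; 50; 64; 78]; [:: 96; 12; 21; 31]; [:: 97; 27; 64; 82]; [:: 97; 10; 38; 49];
      [:: 98; 21; 36; 44]; [:: 98; 0; 57; 76]; [:: 99; 7; 23; 56]; [:: 99; 32; 53; 83];
      [:: 100; 8; 39; 73]; [:: 100; 15; 43; 58]; [:: 101; 7; 28; 59]; [:: 101; 18; 42; 71];
      [:: 102; 32; 47; 56]; [:: 102; 11; 26; 82]; [:: 103; 26; 62; 78]; [:: 103; 0; 29; 49];
      [:: 104; 14; 37; 59]; [:: 104; 13; 51; 83]; [:: 105; 31; 65; 73]; [:: 105; 2; 20; 46];
      [:: 106; 19; 40; 44]; [:: 106; 0; 69; 78]; [:: 107; 28; 44; 71]; [:: 107; 5; 27; 67];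
      [:: 108; 19; 39; 53]; [:: 108; 0; 67; 73]; [:: 109; 14; 44; 62]; [:: 109; 0; 37; 82];
      [:: 2; 23; 45; 82]; [:: 22; 39; 64; 71]; [:: 1; 51; 61; 76]; [:: 23; 28; 58; 83];
      [:: 1; 14; 43; 60]; [:: 11; 31; 48; 83]; [:: 25; 37; 66; 76]; [:: 11; 21; 29; 52];
      [:: 0; 40; 45; 61]].

Definition base_6_29 : seq (seq nat) :=
  [:: [:: 84; 13; 67; 82]; [:: 84; 23; 30; 55]; [:: 85; 1; 34; 43]; [:: 85; 19; 68; 78];
      [:: 86; 12; 14; 82]; [:: 86; 40; 53; 68]; [:: 87; 47; 60; 76]; [:: 87; 1; 18; 35];
      [:: 88; 0; 58; 78]; [:: 88; 23; 34; 54]; [:: 89; 1; 51; 83]; [:: 89; 14; 38; 67];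
      [:: 90; 15; 50; 58]; [:: 90; 6; 28; 79]; [:: 91; 12; 39; 75]; [:: 91; 20; 44; 58];
      [:: 92; 2; 27; 39]; [:: 92; 55; 60; 82]; [:: 93; 32; 48; 73]; [:: 93; 8; 14; 69];
      [:: 94; 39; 69; 82]; [:: 94; 1; 14; 48]; [:: 95; 1; 32; 76]; [:: 95; 15; 54; 61];
      [:: 96; 14; 28; 75]; [:: 96; 2; 48; 59]; [:: 97; 12; 33; 67]; [:: 97; 22; 45; 82];
      [:: 98; 20; 49; 75]; [:: 98; 13; 29; 65]; [:: 99; 34; 55; 57]; [:: 99; 10; 14; 70];
      [:: 100; 34; 51; 69]; [:: 100; 3; 22; 75]; [:: 101; 9; 53; 74]; [:: 101; 23; 39; 65];
      [:: 102; 26; 35; 53]; [:: 102; 0; 59; 80]; [:: 103; 25; 30; 75]; [:: 103; 13; 52; 69];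
      [:: 104; 26; 41; 83]; [:: 104; 13; 54; 66]; [:: 105; 3; 17; 67]; [:: 105; 37; 45; 83];
      [:: 106; 14; 61; 80]; [:: 106; 0; 40; 52]; [:: 107; 11; 21; 54]; [:: 107; 32; 59; 71];
      [:: 108; 28; 42; 76]; [:: 108; 6; 14; 68]; [:: 109; 34; 65; 74]; [:: 109; 9; 21; 43];
      [:: 110; 50; 60; 78]; [:: 110; 7; 14; 36]; [:: 111; 9; 33; 58]; [:: 111; 22; 52; 71];
      [:: 112; 1; 40; 55]; [:: 112; 15; 63; 80]; [:: 14; 34; 58; 72]; [:: 9; 18; 44; 80];
      [:: 7; 22; 35; 67]; [:: 6; 38; 43; 73]; [:: 16; 34; 44; 67]; [:: 11; 42; 62; 73]].

Definition base_6_32 : seq (seq nat) :=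
  [:: [:: 84; 10; 56; 74]; [:: 84; 29; 49; 80]; [:: 84; 27; 35; 47]; [:: 84; 5; 18; 68];
      [:: 85; 22; 45; 56]; [:: 85; 0; 37; 67]; [:: 85; 9; 28; 71]; [:: 85; 18; 49; 79];
      [:: 86; 11; 41; 55]; [:: 86; 31; 45; 60]; [:: 86; 6; 26; 71]; [:: 86; 17; 64; 79];
      [:: 87; 40; 64; 73]; [:: 87; 11; 26; 28]; [:: 87; 1; 42; 82]; [:: 87; 20; 55; 62];
      [:: 88; 20; 47; 71]; [:: 88; 30; 53; 57]; [:: 88; 4; 36; 79]; [:: 88; 12; 26; 68];
      [:: 89; 25; 39; 71]; [:: 89; 4; 47; 65]; [:: 89; 19; 30; 79]; [:: 89; 11; 51; 61];
      [:: 90; 8; 25; 62]; [:: 90; 40; 44; 65]; [:: 90; 20; 52; 75]; [:: 90; 3; 28; 82];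
      [:: 91; 7; 23; 30]; [:: 91; 3; 42; 71]; [:: 91; 38; 53; 64]; [:: 91; 20; 61; 83];
      [:: 92; 22; 68; 82]; [:: 92; 8; 54; 75]; [:: 92; 3; 29; 61]; [:: 92; 18; 41; 43];
      [:: 93; 13; 42; 81]; [:: 93; 15; 32; 68]; [:: 93; 40; 53; 71]; [:: 93; 0; 26; 57];
      [:: 94; 17; 29; 70]; [:: 94; 5; 27; 55]; [:: 94; 8; 40; 57]; [:: 94; 42; 64; 83];
      [:: 95; 34; 46; 82]; [:: 95; 9; 18; 61]; [:: 95; 4; 40; 75]; [:: 95; 24; 53; 68];
      [:: 96; 41; 53; 82]; [:: 96; 18; 58; 74]; [:: 96; 4; 21; 31]; [:: 96; 10; 42; 65];
      [:: 97; 4; 18; 34]; [:: 97; 47; 59; 78]; [:: 97; 24; 50; 74]; [:: 97; 10; 38; 67];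
      [:: 98; 4; 50; 58]; [:: 98; 28; 43; 80]; [:: 98; 9; 15; 40]; [:: 98; 26; 67; 74];
      [:: 99; 45; 65; 73]; [:: 99; 26; 59; 77]; [:: 99; 7; 29; 50]; [:: 99; 4; 16; 37];
      [:: 100; 25; 29; 74]; [:: 100; 8; 18; 66]; [:: 100; 39; 42; 58]; [:: 100; 2; 50; 82];
      [:: 101; 0; 59; 74]; [:: 101; 21; 37; 83]; [:: 101; 14; 50; 63]; [:: 101; 7; 32; 42];
      [:: 102; 3; 54; 81]; [:: 102; 15; 39; 60]; [:: 102; 7; 26; 73]; [:: 102; 32; 43; 67];
      [:: 103; 3; 52; 68]; [:: 103; 14; 29; 60]; [:: 103; 21; 40; 82]; [:: 103; 11; 42; 72];
      [:: 104; 25; 42; 77]; [:: 104; 36; 63; 73]; [:: 104; 3; 31; 55]; [:: 104; 12; 16; 60];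
      [:: 105; 0; 38; 56]; [:: 105; 8; 21; 77]; [:: 105; 31; 53; 65]; [:: 105; 15; 43; 76];
      [:: 106; 22; 40; 47]; [:: 106; 16; 29; 73]; [:: 106; 9; 51; 60]; [:: 106; 5; 64; 81];
      [:: 107; 35; 58; 71]; [:: 107; 11; 52; 78]; [:: 107; 24; 43; 69]; [:: 107; 3; 18; 32];
      [:: 108; 4; 20; 44]; [:: 108; 27; 52; 71]; [:: 108; 12; 33; 64]; [:: 108; 41; 61; 81];
      [:: 109; 0; 69; 73]; [:: 109; 22; 35; 52]; [:: 109; 30; 56; 80]; [:: 109; 8; 15; 45];
      [:: 110; 7; 34; 80]; [:: 110; 16; 38; 49]; [:: 110; 44; 57; 71]; [:: 110; 1; 22; 65];
      [:: 111; 20; 54; 64]; [:: 111; 5; 29; 42]; [:: 111; 9; 38; 72]; [:: 111; 21; 57; 78];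
      [:: 112; 34; 62; 74]; [:: 112; 11; 22; 49]; [:: 112; 1; 35; 43]; [:: 112; 17; 69; 82];
      [:: 113; 35; 51; 57]; [:: 113; 3; 14; 80]; [:: 113; 27; 28; 67]; [:: 113; 13; 46; 71];
      [:: 114; 1; 61; 71]; [:: 114; 22; 28; 53]; [:: 114; 20; 40; 46]; [:: 114; 12; 65; 83];
      [:: 115; 3; 21; 38]; [:: 115; 55; 60; 83]; [:: 115; 10; 15; 44]; [:: 115; 32; 69; 74];
      [:: 2; 19; 49; 71]; [:: 10; 36; 64; 80]; [:: 4; 27; 42; 59]; [:: 26; 31; 47; 61];
      [:: 32; 51; 65; 71]; [:: 12; 20; 39; 77]].

Definition base_9_11 : seq (seq nat) :=
  [:: [:: 126; 85; 16; 70]; [:: 126; 35; 109; 43]; [:: 127; 111; 6; 49]; [:: 127; 72; 88; 36];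
      [:: 128; 84; 38; 1]; [:: 128; 47; 78; 107]; [:: 129; 0; 96; 67]; [:: 129; 106; 45; 22];
      [:: 130; 84; 59; 29]; [:: 130; 66; 124; 0]; [:: 131; 105; 46; 103]; [:: 131; 11; 72; 34];
      [:: 132; 99; 64; 119]; [:: 132; 43; 33; 14]; [:: 133; 117; 25; 70]; [:: 133; 5; 87; 47];
      [:: 134; 14; 42; 39]; [:: 134; 89; 70; 105]; [:: 135; 35; 91; 52]; [:: 135; 20; 78; 106];
      [:: 136; 79; 124; 3]; [:: 136; 55; 27; 87]; [:: 75; 95; 27; 38]; [:: 43; 86; 37; 77];
      [:: 105; 64; 95; 14]; [:: 65; 72; 22; 76]; [:: 27; 26; 116; 109]; [:: 123; 25; 58; 38];
      [:: 6; 94; 23; 122]; [:: 7; 71; 66; 6]; [:: 17; 69; 6; 107]; [:: 91; 19; 117; 125];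
      [:: 51; 124; 30; 123]; [:: 109; 61; 0; 78]; [:: 34; 56; 64; 30]; [:: 75; 123; 98; 77];
      [:: 8; 100; 36; 122]; [:: 23; 59; 57; 79]; [:: 16; 108; 72; 112]; [:: 36; 101; 14; 22];
      [:: 46; 51; 74; 125]; [:: 84; 86; 42; 100]; [:: 1; 46; 5; 96]; [:: 40; 119; 102; 121];
      [:: 7; 12; 38; 42]; [:: 32; 48; 74; 30]; [:: 45; 59; 93; 94]; [:: 77; 24; 120; 76];
      [:: 92; 26; 31; 100]; [:: 16; 115; 52; 48]; [:: 21; 1; 56; 101]; [:: 79; 10; 54; 118];
      [:: 105; 58; 39; 115]; [:: 100; 14; 111; 1]; [:: 61; 2; 99; 72]; [:: 56; 19; 46; 87];
      [:: 77; 95; 109; 15]; [:: 107; 3; 5; 37]; [:: 99; 107; 74; 27]; [:: 125; 83; 37; 48];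
      [:: 68; 101; 90; 17]; [:: 72; 53; 104; 100]; [:: 77; 103; 28; 69]; [:: 4; 43; 51; 18];
      [:: 6; 104; 80; 41]; [:: 58; 6; 74; 91]; [:: 105; 56; 110; 55]].

Definition base_9_17 : seq (seq nat) :=
  [:: [:: 126; 66; 73; 121]; [:: 126; 5; 31; 47]; [:: 126; 17; 49; 59]; [:: 126; 7; 85; 99];
      [:: 126; 27; 35; 118]; [:: 126; 80; 95; 105]; [:: 127; 41; 71; 92]; [:: 127; 30; 49; 60];
      [:: 127; 17; 47; 105]; [:: 127; 3; 87; 113]; [:: 127; 27; 63; 98]; [:: 127; 9; 77; 125];
      [:: 128; 32; 78; 99]; [:: 128; 37; 52; 93]; [:: 128; 14; 72; 113]; [:: 128; 5; 44; 68];
      [:: 128; 22; 60; 87]; [:: 128; 12; 111; 123]; [:: 129; 19; 48; 57]; [:: 129; 35; 89; 111];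
      [:: 129; 69; 92; 113]; [:: 129; 4; 49; 83]; [:: 129; 12; 73; 100]; [:: 129; 22; 29; 122];
      [:: 130; 16; 51; 123]; [:: 130; 40; 64; 93]; [:: 130; 8; 56; 73]; [:: 130; 30; 47; 86];
      [:: 130; 2; 21; 111]; [:: 130; 82; 99; 118]; [:: 131; 41; 53; 72]; [:: 131; 13; 59; 120];
      [:: 131; 18; 33; 98]; [:: 131; 42; 77; 114]; [:: 131; 4; 26; 96]; [:: 131; 65; 85; 109];
      [:: 132; 37; 47; 103]; [:: 132; 28; 92; 114]; [:: 132; 61; 72; 86]; [:: 132; 11; 54; 121];
      [:: 132; 24; 64; 83]; [:: 132; 2; 16; 110]; [:: 133; 33; 111; 121]; [:: 133; 12; 25; 112];
      [:: 133; 5; 64; 80]; [:: 133; 20; 44; 59]; [:: 133; 51; 97; 99]; [:: 133; 38; 73; 84];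
      [:: 134; 2; 80; 106]; [:: 134; 10; 20; 87]; [:: 134; 29; 57; 96]; [:: 134; 49; 64; 73];
      [:: 134; 22; 35; 125]; [:: 134; 45; 102; 118]; [:: 135; 20; 35; 117]; [:: 135; 65; 91; 99];
      [:: 135; 5; 25; 123]; [:: 135; 11; 33; 105]; [:: 135; 55; 56; 78]; [:: 135; 48; 76; 85];
      [:: 136; 32; 67; 117]; [:: 136; 11; 16; 92]; [:: 136; 21; 39; 46]; [:: 136; 3; 75; 98];
      [:: 136; 60; 89; 124]; [:: 136; 52; 77; 105]; [:: 137; 31; 54; 68]; [:: 137; 59; 79; 109];
      [:: 137; 4; 47; 93]; [:: 137; 22; 98; 112]; [:: 137; 10; 38; 90]; [:: 137; 15; 71; 123];
      [:: 138; 16; 33; 67]; [:: 138; 4; 50; 90]; [:: 138; 41; 91; 105]; [:: 138; 24; 44; 78];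
      [:: 138; 61; 74; 114]; [:: 138; 10; 99; 123]; [:: 139; 38; 93; 124]; [:: 139; 24; 79; 86];
      [:: 139; 33; 46; 59]; [:: 139; 55; 76; 102]; [:: 139; 10; 18; 67]; [:: 139; 2; 109; 118];
      [:: 140; 5; 46; 116]; [:: 140; 9; 67; 88]; [:: 140; 28; 75; 119]; [:: 140; 20; 51; 80];
      [:: 140; 23; 91; 103]; [:: 140; 35; 60; 108]; [:: 141; 21; 35; 110]; [:: 141; 43; 57; 120];
      [:: 141; 30; 50; 87]; [:: 141; 14; 71; 100]; [:: 141; 1; 68; 95]; [:: 141; 13; 82; 115];
      [:: 142; 6; 40; 92]; [:: 142; 15; 105; 121]; [:: 142; 33; 57; 99]; [:: 142; 79; 85; 113];
      [:: 142; 27; 43; 66]; [:: 142; 13; 53; 75]; [:: 31; 74; 92; 108]; [:: 25; 37; 50; 70];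
      [:: 24; 34; 97; 117]; [:: 55; 64; 92; 117]; [:: 9; 63; 76; 105]; [:: 24; 48; 84; 99];
      [:: 41; 56; 108; 121]; [:: 4; 65; 101; 124]; [:: 54; 78; 86; 113]; [:: 15; 49; 87; 124];
      [:: 1; 24; 33; 72]; [:: 4; 14; 48; 66]; [:: 4; 33; 54; 120]; [:: 35; 52; 98; 116];
      [:: 13; 25; 52; 106]; [:: 2; 41; 67; 90]; [:: 6; 24; 82; 96]; [:: 18; 34; 86; 109];
      [:: 23; 53; 87; 104]; [:: 7; 16; 36; 44]; [:: 8; 43; 72; 95]; [:: 24; 32; 68; 113];
      [:: 11; 38; 86; 116]; [:: 9; 34; 45; 107]; [:: 4; 15; 74; 118]; [:: 5; 62; 78; 90];
      [:: 25; 53; 59; 105]; [:: 56; 96; 100; 115]; [:: 38; 49; 72; 119]; [:: 25; 29; 81; 113];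
      [:: 15; 78; 97; 104]; [:: 4; 21; 107; 125]; [:: 44; 63; 85; 119]; [:: 4; 34; 87; 123];
      [:: 9; 20; 92; 115]; [:: 17; 36; 50; 78]; [:: 4; 25; 31; 72]; [:: 37; 58; 82; 109];
      [:: 0; 51; 77; 122]; [:: 7; 21; 78; 122]; [:: 38; 77; 102; 115]; [:: 9; 53; 58; 95];
      [:: 63; 71; 88; 121]; [:: 27; 57; 88; 104]; [:: 28; 57; 82; 98]; [:: 14; 32; 76; 91];
      [:: 52; 61; 87; 112]; [:: 29; 78; 94; 121]; [:: 48; 88; 101; 119]; [:: 13; 19; 33; 60];
      [:: 7; 33; 88; 109]; [:: 25; 63; 109; 124]; [:: 46; 73; 110; 115]; [:: 4; 28; 42; 78];
      [:: 40; 63; 83; 94]; [:: 6; 19; 35; 59]; [:: 21; 52; 70; 113]; [:: 8; 24; 41; 50];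
      [:: 52; 63; 95; 110]; [:: 10; 33; 55; 95]; [:: 8; 32; 49; 101]; [:: 41; 45; 82; 111];
      [:: 23; 28; 73; 86]; [:: 6; 54; 61; 123]; [:: 9; 61; 100; 121]; [:: 15; 36; 48; 120];
      [:: 45; 56; 75; 99]; [:: 7; 22; 57; 91]; [:: 19; 78; 88; 100]; [:: 16; 63; 78; 89];
      [:: 40; 69; 102; 122]; [:: 13; 47; 80; 89]; [:: 6; 18; 88; 112]; [:: 24; 53; 65; 103];
      [:: 15; 47; 59; 115]; [:: 55; 84; 110; 113]; [:: 4; 41; 84; 102]; [:: 26; 35; 58; 79];
      [:: 23; 45; 65; 108]; [:: 11; 18; 36; 101]; [:: 34; 42; 59; 116]; [:: 44; 93; 99; 125];
      [:: 3; 52; 108; 115]; [:: 2; 49; 66; 98]; [:: 7; 25; 58; 96]; [:: 0; 35; 61; 115];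
      [:: 41; 47; 68; 85]; [:: 14; 34; 67; 78]; [:: 8; 39; 64; 118]; [:: 9; 68; 82; 106];
      [:: 3; 62; 76; 109]; [:: 4; 20; 37; 104]; [:: 39; 67; 71; 124]; [:: 57; 83; 93; 123];
      [:: 24; 60; 75; 90]; [:: 5; 36; 56; 72]; [:: 11; 21; 42; 74]; [:: 15; 80; 93; 119];
      [:: 32; 74; 86; 106]; [:: 17; 88; 106; 120]; [:: 18; 66; 71; 103]; [:: 43; 97; 110; 114];
      [:: 13; 36; 45; 83]; [:: 13; 72; 100; 117]; [:: 47; 71; 91; 120]; [:: 14; 50; 95; 107];
      [:: 5; 33; 45; 104]; [:: 21; 47; 95; 123]; [:: 11; 32; 64; 112]; [:: 13; 46; 68; 78];
      [:: 44; 70; 94; 105]; [:: 28; 83; 103; 125]; [:: 5; 61; 96; 99]; [:: 5; 20; 74; 93];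
      [:: 20; 56; 105; 118]; [:: 14; 33; 51; 64]; [:: 64; 74; 105; 113]].

Definition base_9_20 : seq (seq nat) :=
  [:: [:: 126; 3; 74; 119]; [:: 126; 64; 87; 109]; [:: 126; 26; 32; 55]; [:: 127; 1; 42; 120];
      [:: 127; 19; 41; 108]; [:: 127; 69; 79; 85]; [:: 128; 8; 76; 103]; [:: 128; 39; 89; 121];
      [:: 128; 27; 44; 56]; [:: 129; 53; 89; 118]; [:: 129; 6; 22; 108]; [:: 129; 41; 60; 77];
      [:: 130; 28; 105; 112]; [:: 130; 16; 78; 89]; [:: 130; 0; 49; 57]; [:: 131; 12; 26; 95];
      [:: 131; 57; 98; 113]; [:: 131; 35; 45; 81]; [:: 132; 8; 17; 77]; [:: 132; 56; 97; 119];
      [:: 132; 38; 52; 103]; [:: 133; 74; 96; 124]; [:: 133; 23; 47; 61]; [:: 133; 3; 31; 111];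
      [:: 134; 14; 94; 114]; [:: 134; 1; 36; 104]; [:: 134; 54; 65; 81]; [:: 135; 24; 60; 112];
      [:: 135; 11; 41; 74]; [:: 135; 53; 87; 105]; [:: 136; 59; 105; 116]; [:: 136; 7; 30; 73];
      [:: 136; 15; 47; 91]; [:: 137; 1; 77; 105]; [:: 137; 17; 45; 125]; [:: 137; 37; 65; 94];
      [:: 138; 31; 66; 90]; [:: 138; 11; 24; 51]; [:: 138; 76; 106; 114]; [:: 139; 14; 109; 121];
      [:: 139; 37; 43; 77]; [:: 139; 1; 65; 97]; [:: 140; 23; 62; 90]; [:: 140; 12; 32; 48];
      [:: 140; 74; 105; 125]; [:: 141; 51; 70; 93]; [:: 141; 18; 31; 122]; [:: 141; 3; 64; 99];
      [:: 142; 36; 75; 96]; [:: 142; 1; 23; 100]; [:: 142; 55; 68; 115]; [:: 143; 51; 97; 107];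
      [:: 143; 3; 35; 114]; [:: 143; 25; 58; 83]; [:: 144; 24; 28; 50]; [:: 144; 67; 82; 121];
      [:: 144; 8; 89; 106]; [:: 145; 27; 37; 109]; [:: 145; 1; 61; 82]; [:: 145; 49; 92; 119];
      [:: 20; 29; 71; 95]; [:: 0; 31; 94; 101]; [:: 3; 27; 58; 81]; [:: 37; 64; 78; 95];
      [:: 46; 56; 74; 106]; [:: 11; 22; 102; 118]; [:: 52; 61; 81; 100]; [:: 8; 26; 82; 123];
      [:: 6; 50; 71; 118]; [:: 3; 57; 76; 116]; [:: 0; 47; 63; 84]; [:: 39; 61; 94; 108];
      [:: 18; 70; 110; 113]; [:: 1; 16; 49; 67]; [:: 50; 76; 88; 111]; [:: 1; 22; 90; 121];
      [:: 37; 44; 81; 113]; [:: 1; 30; 60; 118]; [:: 22; 33; 45; 62]; [:: 5; 29; 42; 97];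
      [:: 40; 57; 111; 121]; [:: 38; 76; 89; 100]; [:: 21; 38; 86; 124]; [:: 6; 32; 51; 81];
      [:: 0; 39; 62; 122]; [:: 4; 16; 60; 94]; [:: 30; 68; 105; 119]; [:: 21; 55; 108; 112];
      [:: 0; 20; 41; 42]; [:: 20; 34; 79; 108]; [:: 20; 36; 73; 92]; [:: 23; 58; 70; 106];
      [:: 7; 24; 79; 94]; [:: 43; 62; 75; 124]; [:: 15; 30; 56; 78]; [:: 12; 55; 56; 98];
      [:: 45; 76; 92; 118]; [:: 23; 28; 53; 115]; [:: 5; 38; 56; 123]; [:: 36; 61; 97; 116];
      [:: 8; 93; 105; 118]; [:: 15; 72; 86; 116]; [:: 15; 92; 108; 113]; [:: 6; 25; 59; 85];
      [:: 26; 51; 76; 110]; [:: 8; 46; 85; 100]; [:: 26; 38; 58; 102]; [:: 40; 44; 93; 99];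
      [:: 2; 72; 90; 109]; [:: 43; 81; 106; 115]; [:: 19; 54; 61; 104]; [:: 6; 28; 45; 120];
      [:: 55; 61; 86; 99]; [:: 12; 44; 84; 121]].

Definition base_9_23 : seq (seq nat) :=
  [:: [:: 126; 16; 30; 89]; [:: 126; 46; 64; 110]; [:: 126; 4; 40; 70]; [:: 126; 55; 104; 119];
      [:: 126; 10; 83; 115]; [:: 126; 24; 60; 95]; [:: 127; 16; 60; 112]; [:: 127; 3; 22; 46];
      [:: 127; 54; 79; 107]; [:: 127; 40; 69; 84]; [:: 127; 9; 29; 121]; [:: 127; 75; 96; 101];
      [:: 128; 26; 83; 107]; [:: 128; 33; 71; 89]; [:: 128; 47; 56; 104]; [:: 128; 5; 36; 123];
      [:: 128; 13; 49; 115]; [:: 128; 14; 69; 95]; [:: 129; 4; 49; 125]; [:: 129; 17; 66; 115];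
      [:: 129; 21; 56; 80]; [:: 129; 9; 36; 76]; [:: 129; 46; 92; 102]; [:: 129; 30; 90; 107];
      [:: 130; 40; 48; 62]; [:: 130; 10; 92; 116]; [:: 130; 23; 63; 105]; [:: 130; 30; 49; 78];
      [:: 130; 70; 104; 123]; [:: 130; 1; 19; 88]; [:: 131; 51; 107; 118]; [:: 131; 65; 85; 120];
      [:: 131; 15; 37; 83]; [:: 131; 9; 27; 73]; [:: 131; 32; 44; 93]; [:: 131; 3; 57; 99];
      [:: 132; 0; 62; 101]; [:: 132; 15; 30; 51]; [:: 132; 47; 71; 113]; [:: 132; 7; 63; 79];
      [:: 132; 24; 37; 96]; [:: 132; 85; 105; 124]; [:: 133; 55; 78; 110]; [:: 133; 16; 74; 122];
      [:: 133; 13; 27; 41]; [:: 133; 89; 99; 112]; [:: 133; 3; 48; 65]; [:: 133; 29; 57; 91];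
      [:: 134; 15; 32; 68]; [:: 134; 27; 35; 101]; [:: 134; 5; 97; 122]; [:: 134; 9; 50; 70];
      [:: 134; 59; 107; 114]; [:: 134; 42; 83; 90]; [:: 135; 19; 30; 124]; [:: 135; 3; 73; 101];
      [:: 135; 38; 43; 94]; [:: 135; 24; 65; 116]; [:: 135; 50; 81; 89]; [:: 135; 8; 58; 109];
      [:: 136; 63; 80; 113]; [:: 136; 12; 28; 101]; [:: 136; 71; 87; 125]; [:: 136; 15; 36; 61];
      [:: 136; 24; 54; 91]; [:: 136; 4; 46; 111]; [:: 137; 2; 91; 107]; [:: 137; 19; 28; 45];
      [:: 137; 49; 84; 118]; [:: 137; 37; 64; 75]; [:: 137; 21; 82; 100]; [:: 137; 12; 59; 125];
      [:: 138; 83; 109; 123]; [:: 138; 41; 54; 104]; [:: 138; 25; 57; 93]; [:: 138; 9; 18; 71];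
      [:: 138; 1; 90; 116]; [:: 138; 29; 42; 64]; [:: 139; 27; 28; 121]; [:: 139; 4; 82; 91];
      [:: 139; 10; 50; 69]; [:: 139; 17; 36; 101]; [:: 139; 61; 70; 87]; [:: 139; 42; 111; 113];
      [:: 140; 0; 29; 99]; [:: 140; 54; 71; 94]; [:: 140; 43; 86; 119]; [:: 140; 39; 59; 77];
      [:: 140; 25; 108; 114]; [:: 140; 13; 14; 68]; [:: 141; 28; 70; 118]; [:: 141; 23; 44; 103];
      [:: 141; 6; 80; 110]; [:: 141; 13; 17; 87]; [:: 141; 37; 49; 67]; [:: 141; 61; 94; 125];
      [:: 142; 11; 27; 55]; [:: 142; 56; 79; 123]; [:: 142; 73; 85; 104]; [:: 142; 4; 30; 67];
      [:: 142; 38; 95; 116]; [:: 142; 19; 44; 107]; [:: 143; 33; 73; 109]; [:: 143; 1; 26; 69];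
      [:: 143; 43; 62; 123]; [:: 143; 16; 54; 80]; [:: 143; 7; 93; 99]; [:: 143; 40; 86; 114];
      [:: 144; 26; 60; 87]; [:: 144; 8; 39; 53]; [:: 144; 66; 74; 106]; [:: 144; 33; 80; 91];
      [:: 144; 2; 17; 125]; [:: 144; 42; 103; 114]; [:: 145; 36; 111; 116]; [:: 145; 18; 47; 121];
      [:: 145; 13; 26; 86]; [:: 145; 33; 62; 76]; [:: 145; 5; 81; 93]; [:: 145; 55; 69; 103];
      [:: 146; 38; 44; 121]; [:: 146; 31; 72; 106]; [:: 146; 25; 67; 95]; [:: 146; 12; 89; 98];
      [:: 146; 1; 51; 60]; [:: 146; 15; 81; 117]; [:: 147; 5; 19; 102]; [:: 147; 44; 65; 96];
      [:: 147; 39; 50; 56]; [:: 147; 25; 70; 84]; [:: 147; 8; 107; 122]; [:: 147; 30; 80; 114];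
      [:: 148; 9; 63; 72]; [:: 148; 62; 100; 115]; [:: 148; 0; 20; 97]; [:: 148; 26; 38; 105];
      [:: 148; 50; 77; 87]; [:: 148; 28; 44; 119]; [:: 32; 57; 96; 104]; [:: 51; 59; 76; 109];
      [:: 11; 30; 79; 99]; [:: 65; 79; 90; 103]; [:: 1; 54; 61; 118]; [:: 27; 37; 80; 125];
      [:: 12; 27; 84; 102]; [:: 35; 52; 85; 117]; [:: 34; 93; 102; 116]; [:: 5; 56; 82; 112];
      [:: 6; 16; 36; 84]; [:: 41; 49; 70; 94]; [:: 3; 23; 54; 67]; [:: 17; 41; 44; 88];
      [:: 23; 33; 60; 114]; [:: 24; 44; 80; 118]; [:: 3; 19; 74; 111]; [:: 4; 39; 60; 73];
      [:: 11; 59; 81; 87]; [:: 4; 64; 104; 124]; [:: 22; 55; 60; 91]; [:: 16; 28; 58; 102];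
      [:: 38; 45; 90; 98]; [:: 21; 28; 66; 90]; [:: 2; 43; 93; 118]; [:: 31; 51; 89; 110];
      [:: 9; 19; 42; 109]; [:: 40; 66; 95; 109]; [:: 27; 49; 103; 124]; [:: 54; 64; 70; 100];
      [:: 12; 29; 47; 63]; [:: 32; 77; 103; 112]; [:: 7; 32; 46; 78]; [:: 25; 64; 74; 125];
      [:: 10; 93; 104; 120]; [:: 8; 25; 110; 118]; [:: 18; 75; 93; 112]; [:: 45; 64; 82; 103];
      [:: 16; 55; 94; 116]; [:: 18; 55; 97; 120]; [:: 66; 89; 107; 123]; [:: 16; 70; 90; 120];
      [:: 2; 25; 29; 124]; [:: 40; 56; 105; 125]; [:: 35; 79; 93; 108]; [:: 12; 19; 71; 116];
      [:: 46; 57; 76; 115]; [:: 35; 63; 70; 119]; [:: 4; 38; 63; 117]; [:: 47; 62; 82; 125];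
      [:: 34; 60; 84; 107]; [:: 13; 44; 71; 114]; [:: 34; 51; 66; 124]; [:: 8; 68; 95; 105];
      [:: 7; 29; 92; 125]; [:: 11; 23; 41; 118]; [:: 10; 61; 91; 119]; [:: 3; 36; 75; 106];
      [:: 16; 41; 81; 123]; [:: 2; 90; 104; 114]; [:: 13; 82; 97; 109]; [:: 10; 31; 46; 85];
      [:: 9; 38; 100; 124]; [:: 2; 26; 48; 70]; [:: 16; 50; 66; 101]; [:: 23; 39; 55; 100];
      [:: 19; 64; 79; 101]; [:: 14; 34; 94; 105]; [:: 15; 66; 78; 87]; [:: 16; 39; 103; 115];
      [:: 21; 44; 105; 123]; [:: 8; 50; 61; 86]; [:: 5; 54; 88; 124]; [:: 14; 49; 97; 110];
      [:: 22; 47; 72; 87]; [:: 6; 18; 46; 105]; [:: 26; 31; 53; 116]; [:: 41; 60; 90; 105];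
      [:: 67; 72; 92; 112]; [:: 65; 78; 95; 124]; [:: 4; 48; 61; 90]; [:: 22; 48; 76; 95];
      [:: 4; 28; 51; 79]; [:: 4; 26; 32; 106]; [:: 1; 31; 49; 75]; [:: 4; 36; 77; 97];
      [:: 43; 76; 91; 98]; [:: 13; 38; 47; 80]; [:: 8; 41; 45; 65]; [:: 2; 34; 67; 113];
      [:: 53; 75; 110; 120]; [:: 10; 16; 49; 59]; [:: 16; 47; 57; 78]; [:: 7; 19; 59; 105];
      [:: 26; 28; 59; 74]; [:: 24; 79; 102; 120]; [:: 66; 85; 111; 114]; [:: 4; 25; 83; 88];
      [:: 20; 58; 76; 101]].

Definition base_9_26 : seq (seq nat) :=
  [:: [:: 126; 21; 39; 116]; [:: 126; 65; 88; 106]; [:: 126; 3; 54; 72]; [:: 127; 27; 29; 56];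
      [:: 127; 8; 73; 101]; [:: 127; 55; 86; 113]; [:: 128; 2; 68; 100]; [:: 128; 73; 86; 121];
      [:: 128; 15; 36; 50]; [:: 129; 30; 48; 123]; [:: 129; 17; 95; 109]; [:: 129; 13; 59; 74];
      [:: 130; 33; 50; 66]; [:: 130; 10; 107; 120]; [:: 130; 24; 82; 86]; [:: 131; 14; 89; 102];
      [:: 131; 40; 48; 81]; [:: 131; 10; 68; 114]; [:: 132; 38; 69; 73]; [:: 132; 15; 98; 115];
      [:: 132; 5; 51; 90]; [:: 133; 27; 100; 120]; [:: 133; 44; 57; 96]; [:: 133; 2; 38; 72];
      [:: 134; 52; 63; 103]; [:: 134; 2; 33; 89]; [:: 134; 16; 76; 113]; [:: 135; 28; 47; 95];
      [:: 135; 5; 109; 113]; [:: 135; 19; 59; 75]; [:: 136; 59; 85; 118]; [:: 136; 6; 41; 77];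
      [:: 136; 17; 53; 98]; [:: 137; 2; 96; 104]; [:: 137; 50; 60; 71]; [:: 137; 14; 40; 112];
      [:: 138; 1; 18; 91]; [:: 138; 41; 69; 121]; [:: 138; 44; 72; 111]; [:: 139; 7; 75; 118];
      [:: 139; 26; 39; 93]; [:: 139; 47; 69; 111]; [:: 140; 12; 43; 111]; [:: 140; 59; 92; 121];
      [:: 140; 21; 38; 70]; [:: 141; 14; 97; 98]; [:: 141; 39; 70; 123]; [:: 141; 1; 55; 56];
      [:: 142; 26; 60; 125]; [:: 142; 35; 82; 99]; [:: 142; 12; 50; 93]; [:: 143; 4; 58; 119];
      [:: 143; 32; 43; 109]; [:: 143; 14; 79; 86]; [:: 144; 22; 87; 124]; [:: 144; 6; 38; 98];
      [:: 144; 49; 63; 75]; [:: 145; 67; 87; 104]; [:: 145; 18; 38; 77]; [:: 145; 4; 47; 113];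
      [:: 146; 2; 80; 90]; [:: 146; 24; 48; 57]; [:: 146; 31; 104; 119]; [:: 147; 21; 63; 98];
      [:: 147; 1; 40; 84]; [:: 147; 44; 83; 113]; [:: 148; 60; 82; 91]; [:: 148; 27; 53; 99];
      [:: 148; 9; 28; 115]; [:: 149; 40; 61; 91]; [:: 149; 5; 19; 47]; [:: 149; 71; 111; 116];
      [:: 150; 4; 28; 54]; [:: 150; 65; 72; 114]; [:: 150; 18; 84; 108]; [:: 151; 52; 110; 122];
      [:: 151; 4; 23; 71]; [:: 151; 41; 65; 93]; [:: 20; 50; 57; 81]; [:: 2; 49; 95; 123];
      [:: 51; 74; 86; 106]; [:: 46; 58; 75; 108]; [:: 20; 39; 49; 105]; [:: 66; 84; 100; 123];
      [:: 24; 63; 77; 113]; [:: 0; 48; 84; 109]; [:: 3; 14; 59; 115]; [:: 8; 17; 28; 58];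
      [:: 1; 19; 63; 87]; [:: 31; 46; 65; 123]; [:: 29; 45; 86; 124]; [:: 0; 59; 103; 113];
      [:: 10; 26; 40; 101]; [:: 36; 42; 80; 86]; [:: 39; 52; 79; 101]; [:: 35; 64; 77; 107];
      [:: 39; 77; 85; 104]; [:: 35; 67; 94; 106]; [:: 81; 95; 102; 113]; [:: 15; 38; 47; 123];
      [:: 4; 25; 77; 96]; [:: 6; 32; 100; 122]; [:: 65; 71; 86; 120]; [:: 5; 15; 49; 79];
      [:: 2; 17; 39; 121]; [:: 6; 18; 55; 95]; [:: 51; 71; 88; 118]; [:: 4; 67; 76; 105];
      [:: 39; 82; 106; 122]; [:: 39; 64; 86; 109]; [:: 5; 34; 71; 96]; [:: 0; 76; 110; 117];
      [:: 24; 51; 84; 115]; [:: 27; 52; 109; 123]; [:: 9; 50; 56; 123]; [:: 22; 55; 58; 77];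
      [:: 24; 34; 56; 103]; [:: 0; 41; 67; 96]; [:: 6; 14; 45; 63]; [:: 35; 42; 84; 124];
      [:: 1; 21; 78; 101]; [:: 20; 74; 90; 112]; [:: 7; 20; 35; 58]].

Definition base_9_29 : seq (seq nat) :=
  [:: [:: 126; 17; 36; 98]; [:: 126; 67; 83; 91]; [:: 126; 28; 89; 118]; [:: 126; 4; 25; 58];
      [:: 126; 52; 110; 122]; [:: 126; 13; 45; 72]; [:: 127; 10; 74; 84]; [:: 127; 54; 80; 125];
      [:: 127; 14; 34; 104]; [:: 127; 25; 59; 111]; [:: 127; 2; 46; 96]; [:: 127; 37; 64; 116];
      [:: 128; 11; 20; 113]; [:: 128; 37; 52; 60]; [:: 128; 68; 88; 110]; [:: 128; 44; 95; 119];
      [:: 128; 0; 27; 73]; [:: 128; 33; 77; 101]; [:: 129; 24; 31; 54]; [:: 129; 62; 74; 109];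
      [:: 129; 0; 99; 118]; [:: 129; 7; 81; 93]; [:: 129; 43; 90; 121]; [:: 129; 20; 40; 64];
      [:: 130; 39; 57; 77]; [:: 130; 29; 72; 124]; [:: 130; 4; 47; 107]; [:: 130; 26; 93; 118];
      [:: 130; 9; 50; 65]; [:: 130; 14; 90; 98]; [:: 131; 4; 57; 87]; [:: 131; 8; 23; 107];
      [:: 131; 33; 80; 123]; [:: 131; 40; 47; 103]; [:: 131; 14; 51; 64]; [:: 131; 70; 95; 115];
      [:: 132; 3; 28; 108]; [:: 132; 51; 76; 95]; [:: 132; 12; 45; 121]; [:: 132; 62; 90; 113];
      [:: 132; 21; 37; 104]; [:: 132; 19; 64; 79]; [:: 133; 54; 56; 115]; [:: 133; 6; 71; 101];
      [:: 133; 13; 36; 78]; [:: 133; 28; 88; 111]; [:: 133; 21; 46; 63]; [:: 133; 19; 95; 120];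
      [:: 134; 74; 100; 115]; [:: 134; 23; 34; 121]; [:: 134; 3; 19; 109]; [:: 134; 13; 61; 97];
      [:: 134; 36; 46; 87]; [:: 134; 49; 67; 81]; [:: 135; 20; 36; 112]; [:: 135; 8; 27; 101];
      [:: 135; 59; 110; 119]; [:: 135; 32; 47; 72]; [:: 135; 52; 80; 86]; [:: 135; 4; 67; 96];
      [:: 136; 8; 16; 109]; [:: 136; 0; 45; 78]; [:: 136; 34; 85; 118]; [:: 136; 35; 68; 119];
      [:: 136; 24; 55; 93]; [:: 136; 59; 72; 100]; [:: 137; 25; 39; 56]; [:: 137; 9; 104; 113];
      [:: 137; 16; 79; 123]; [:: 137; 47; 69; 110]; [:: 137; 0; 49; 97]; [:: 137; 32; 71; 89];
      [:: 138; 26; 81; 84]; [:: 138; 28; 54; 68]; [:: 138; 1; 42; 117]; [:: 138; 11; 39; 61];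
      [:: 138; 17; 71; 108]; [:: 138; 97; 104; 119]; [:: 139; 8; 43; 95]; [:: 139; 20; 75; 125];
      [:: 139; 32; 49; 62]; [:: 139; 23; 81; 89]; [:: 139; 2; 103; 117]; [:: 139; 38; 63; 110];
      [:: 140; 34; 66; 92]; [:: 140; 45; 88; 116]; [:: 140; 12; 23; 101]; [:: 140; 4; 62; 83];
      [:: 140; 52; 109; 119]; [:: 140; 16; 40; 73]; [:: 141; 14; 100; 120]; [:: 141; 60; 94; 117];
      [:: 141; 0; 66; 74]; [:: 141; 12; 52; 82]; [:: 141; 29; 45; 106]; [:: 141; 23; 40; 85];
      [:: 142; 19; 44; 123]; [:: 142; 54; 110; 116]; [:: 142; 27; 77; 97]; [:: 142; 10; 30; 64];
      [:: 142; 4; 88; 104]; [:: 142; 37; 57; 72]; [:: 143; 28; 73; 107]; [:: 143; 42; 69; 79];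
      [:: 143; 38; 50; 87]; [:: 143; 18; 92; 103]; [:: 143; 10; 23; 125]; [:: 143; 6; 62; 118];
      [:: 144; 26; 29; 107]; [:: 144; 9; 40; 80]; [:: 144; 44; 74; 101]; [:: 144; 19; 60; 92];
      [:: 144; 66; 90; 117]; [:: 144; 1; 55; 123]; [:: 145; 11; 30; 94]; [:: 145; 78; 99; 117];
      [:: 145; 23; 49; 110]; [:: 145; 1; 41; 47]; [:: 145; 15; 68; 71]; [:: 145; 57; 90; 123];
      [:: 146; 23; 82; 122]; [:: 146; 52; 74; 118]; [:: 146; 19; 33; 89]; [:: 146; 0; 65; 95];
      [:: 146; 44; 60; 110]; [:: 146; 13; 39; 103]; [:: 147; 7; 29; 51]; [:: 147; 36; 95; 123];
      [:: 147; 27; 57; 74]; [:: 147; 0; 64; 113]; [:: 147; 82; 89; 106]; [:: 147; 16; 45; 103];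
      [:: 148; 63; 101; 120]; [:: 148; 21; 53; 118]; [:: 148; 70; 86; 106]; [:: 148; 8; 32; 60];
      [:: 148; 20; 46; 77]; [:: 148; 3; 39; 92]; [:: 149; 36; 52; 79]; [:: 149; 10; 14; 89];
      [:: 149; 63; 72; 104]; [:: 149; 96; 109; 123]; [:: 149; 28; 47; 62]; [:: 149; 1; 27; 118];
      [:: 150; 2; 70; 125]; [:: 150; 25; 52; 88]; [:: 150; 44; 67; 78]; [:: 150; 28; 109; 114];
      [:: 150; 20; 41; 60]; [:: 150; 7; 95; 98]; [:: 151; 1; 49; 109]; [:: 151; 17; 59; 96];
      [:: 151; 24; 63; 84]; [:: 151; 30; 43; 104]; [:: 151; 39; 80; 116]; [:: 151; 12; 75; 119];
      [:: 152; 12; 61; 90]; [:: 152; 35; 92; 108]; [:: 152; 49; 76; 100]; [:: 152; 2; 31; 83];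
      [:: 152; 16; 47; 117]; [:: 152; 26; 67; 120]; [:: 153; 10; 63; 117]; [:: 153; 74; 95; 107];
      [:: 153; 19; 80; 121]; [:: 153; 3; 27; 29]; [:: 153; 50; 60; 102]; [:: 153; 36; 44; 90];
      [:: 154; 42; 60; 78]; [:: 154; 18; 90; 114]; [:: 154; 9; 67; 111]; [:: 154; 5; 33; 74];
      [:: 154; 51; 93; 99]; [:: 154; 21; 41; 124]; [:: 21; 89; 100; 125]; [:: 5; 37; 105; 123];
      [:: 12; 73; 88; 113]; [:: 11; 47; 79; 84]; [:: 28; 55; 91; 121]; [:: 15; 69; 73; 112];
      [:: 5; 35; 81; 90]; [:: 16; 55; 60; 98]; [:: 22; 42; 71; 95]; [:: 7; 52; 76; 112];
      [:: 18; 61; 83; 116]; [:: 6; 18; 46; 56]; [:: 10; 20; 47; 95]; [:: 7; 66; 99; 120];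
      [:: 16; 41; 46; 108]; [:: 11; 27; 80; 114]; [:: 45; 76; 90; 125]; [:: 33; 43; 108; 115];
      [:: 8; 25; 33; 114]; [:: 11; 54; 66; 109]; [:: 79; 95; 106; 121]; [:: 32; 46; 81; 112];
      [:: 17; 39; 50; 76]; [:: 22; 67; 74; 105]; [:: 66; 78; 89; 101]; [:: 13; 27; 38; 59];
      [:: 4; 54; 86; 100]; [:: 36; 86; 105; 125]; [:: 27; 81; 95; 109]; [:: 2; 36; 53; 116];
      [:: 2; 37; 73; 93]; [:: 0; 34; 80; 119]; [:: 9; 43; 56; 120]; [:: 2; 27; 63; 100];
      [:: 0; 18; 30; 121]; [:: 57; 80; 97; 105]; [:: 21; 45; 57; 71]; [:: 7; 45; 64; 119];
      [:: 20; 68; 73; 86]; [:: 2; 19; 54; 106]; [:: 21; 36; 50; 114]; [:: 50; 79; 97; 99];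
      [:: 28; 46; 60; 99]; [:: 34; 56; 82; 100]; [:: 1; 14; 32; 63]; [:: 26; 47; 111; 114];
      [:: 50; 67; 73; 119]; [:: 60; 71; 100; 113]; [:: 21; 33; 68; 93]; [:: 41; 69; 96; 115];
      [:: 37; 46; 67; 95]; [:: 12; 56; 87; 105]; [:: 30; 66; 85; 102]; [:: 67; 80; 106; 115];
      [:: 6; 21; 76; 92]; [:: 3; 18; 49; 80]; [:: 23; 35; 46; 74]; [:: 26; 48; 90; 103];
      [:: 6; 61; 86; 123]; [:: 12; 39; 70; 109]; [:: 10; 15; 31; 49]; [:: 26; 54; 61; 119];
      [:: 39; 93; 110; 114]; [:: 7; 20; 49; 84]; [:: 15; 32; 93; 117]; [:: 48; 95; 100; 117];
      [:: 5; 21; 47; 65]; [:: 13; 20; 79; 109]; [:: 32; 53; 69; 84]; [:: 36; 49; 70; 89];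
      [:: 5; 36; 80; 102]; [:: 20; 28; 59; 97]; [:: 50; 61; 96; 104]; [:: 3; 17; 84; 105];
      [:: 10; 39; 104; 120]; [:: 58; 82; 111; 112]; [:: 27; 33; 83; 102]; [:: 37; 66; 98; 122];
      [:: 1; 60; 87; 121]; [:: 10; 33; 70; 92]; [:: 30; 56; 72; 119]].

Definition base_9_32 : seq (seq nat) :=
  [:: [:: 126; 43; 82; 95]; [:: 126; 21; 37; 119]; [:: 126; 3; 61; 109]; [:: 127; 12; 41; 72];
      [:: 127; 15; 48; 61]; [:: 127; 88; 100; 119]; [:: 128; 66; 75; 125]; [:: 128; 3; 45; 84];
      [:: 128; 15; 32; 110]; [:: 129; 14; 64; 77]; [:: 129; 46; 96; 114]; [:: 129; 8; 35; 105];
      [:: 130; 4; 93; 119]; [:: 130; 39; 65; 100]; [:: 130; 22; 47; 74]; [:: 131; 4; 71; 97];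
      [:: 131; 30; 44; 119]; [:: 131; 15; 60; 104]; [:: 132; 61; 76; 124]; [:: 132; 8; 22; 108];
      [:: 132; 36; 43; 87]; [:: 133; 38; 74; 94]; [:: 133; 6; 27; 54]; [:: 133; 57; 100; 122];
      [:: 134; 35; 51; 88]; [:: 134; 7; 56; 112]; [:: 134; 17; 75; 100]; [:: 135; 4; 50; 120];
      [:: 135; 21; 87; 111]; [:: 135; 32; 64; 76]; [:: 136; 33; 76; 116]; [:: 136; 24; 44; 101];
      [:: 136; 0; 67; 86]; [:: 137; 46; 107; 119]; [:: 137; 40; 68; 86]; [:: 137; 1; 23; 70];
      [:: 138; 32; 91; 116]; [:: 138; 4; 69; 76]; [:: 138; 23; 53; 108]; [:: 139; 17; 56; 81];
      [:: 139; 87; 98; 125]; [:: 139; 1; 36; 48]; [:: 140; 78; 108; 117]; [:: 140; 3; 15; 91];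
      [:: 140; 28; 55; 69]; [:: 141; 33; 109; 112]; [:: 141; 15; 53; 70]; [:: 141; 13; 63; 84];
      [:: 142; 9; 15; 77]; [:: 142; 41; 57; 93]; [:: 142; 48; 104; 124]; [:: 143; 48; 59; 98];
      [:: 143; 21; 39; 93]; [:: 143; 1; 79; 125]; [:: 144; 49; 75; 116]; [:: 144; 24; 30; 59];
      [:: 144; 0; 91; 104]; [:: 145; 24; 81; 116]; [:: 145; 60; 89; 98]; [:: 145; 12; 37; 47];
      [:: 146; 31; 46; 99]; [:: 146; 2; 21; 120]; [:: 146; 67; 72; 95]; [:: 147; 25; 30; 122];
      [:: 147; 12; 48; 100]; [:: 147; 69; 77; 85]; [:: 148; 25; 48; 88]; [:: 148; 13; 30; 76];
      [:: 148; 60; 101; 122]; [:: 149; 9; 29; 52]; [:: 149; 21; 61; 116]; [:: 149; 70; 85; 99];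
      [:: 150; 0; 44; 87]; [:: 150; 20; 64; 121]; [:: 150; 36; 78; 109]; [:: 151; 51; 110; 125];
      [:: 151; 0; 24; 66]; [:: 151; 38; 76; 93]; [:: 152; 16; 44; 81]; [:: 152; 38; 58; 112];
      [:: 152; 7; 97; 105]; [:: 153; 3; 16; 59]; [:: 153; 83; 101; 112]; [:: 153; 32; 51; 93];
      [:: 154; 11; 34; 100]; [:: 154; 48; 67; 125]; [:: 154; 25; 71; 92]; [:: 155; 47; 75; 119];
      [:: 155; 17; 31; 110]; [:: 155; 0; 59; 96]; [:: 156; 18; 41; 49]; [:: 156; 57; 97; 99];
      [:: 156; 12; 74; 119]; [:: 157; 51; 60; 111]; [:: 157; 78; 89; 116]; [:: 157; 6; 24; 36];
      [:: 8; 25; 103; 119]; [:: 25; 51; 58; 96]; [:: 2; 28; 109; 119]; [:: 14; 50; 82; 84];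
      [:: 6; 51; 61; 71]; [:: 20; 31; 79; 102]; [:: 0; 28; 53; 122]; [:: 32; 72; 90; 119];
      [:: 51; 63; 97; 116]; [:: 16; 48; 89; 112]; [:: 19; 87; 107; 121]; [:: 26; 55; 79; 99];
      [:: 50; 66; 72; 98]; [:: 2; 27; 35; 107]; [:: 48; 66; 83; 111]; [:: 28; 46; 61; 111];
      [:: 46; 76; 95; 100]; [:: 5; 41; 62; 78]; [:: 19; 67; 84; 119]; [:: 24; 37; 85; 113];
      [:: 29; 46; 68; 93]; [:: 4; 27; 87; 117]; [:: 2; 18; 53; 56]; [:: 13; 91; 109; 113];
      [:: 24; 39; 61; 88]; [:: 34; 57; 75; 111]; [:: 16; 40; 57; 121]; [:: 2; 43; 72; 114];
      [:: 3; 64; 78; 111]; [:: 5; 29; 67; 114]; [:: 38; 71; 95; 98]; [:: 4; 44; 64; 124];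
      [:: 10; 76; 90; 111]; [:: 23; 30; 79; 116]; [:: 12; 30; 50; 83]; [:: 11; 26; 95; 110]].

Definition base_9_38 : seq (seq nat) :=
  [:: [:: 126; 5; 78; 107]; [:: 126; 55; 57; 95]; [:: 126; 18; 30; 112]; [:: 127; 53; 82; 104];
      [:: 127; 6; 59; 92]; [:: 127; 15; 33; 122]; [:: 128; 42; 93; 119]; [:: 128; 11; 19; 41];
      [:: 128; 60; 74; 107]; [:: 129; 25; 82; 90]; [:: 129; 52; 59; 110]; [:: 129; 8; 31; 124];
      [:: 130; 28; 56; 105]; [:: 130; 19; 52; 116]; [:: 130; 0; 75; 92]; [:: 131; 39; 57; 83];
      [:: 131; 11; 25; 100]; [:: 131; 52; 91; 123]; [:: 132; 52; 88; 119]; [:: 132; 10; 37; 60];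
      [:: 132; 27; 75; 106]; [:: 133; 0; 54; 63]; [:: 133; 22; 29; 74]; [:: 133; 90; 106; 120];
      [:: 134; 21; 34; 76]; [:: 134; 10; 45; 109]; [:: 134; 69; 90; 119]; [:: 135; 23; 55; 83];
      [:: 135; 5; 61; 113]; [:: 135; 32; 84; 98]; [:: 136; 23; 66; 107]; [:: 136; 2; 47; 82];
      [:: 136; 35; 88; 112]; [:: 137; 26; 75; 100]; [:: 137; 0; 58; 120]; [:: 137; 39; 43; 86];
      [:: 138; 13; 22; 95]; [:: 138; 28; 44; 61]; [:: 138; 75; 102; 125]; [:: 139; 0; 76; 111];
      [:: 139; 15; 45; 120]; [:: 139; 37; 67; 95]; [:: 140; 12; 85; 121]; [:: 140; 28; 54; 78];
      [:: 140; 16; 68; 99]; [:: 141; 38; 93; 105]; [:: 141; 67; 74; 120]; [:: 141; 5; 24; 51];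
      [:: 142; 0; 25; 72]; [:: 142; 39; 63; 103]; [:: 142; 44; 88; 123]; [:: 143; 67; 70; 93];
      [:: 143; 8; 104; 121]; [:: 143; 19; 36; 53]; [:: 144; 7; 90; 107]; [:: 144; 20; 55; 66];
      [:: 144; 28; 76; 115]; [:: 145; 28; 67; 90]; [:: 145; 5; 82; 119]; [:: 145; 26; 50; 107];
      [:: 146; 83; 107; 113]; [:: 146; 19; 59; 95]; [:: 146; 9; 35; 50]; [:: 147; 36; 71; 86];
      [:: 147; 11; 15; 102]; [:: 147; 53; 66; 112]; [:: 148; 92; 101; 120]; [:: 148; 18; 44; 68];
      [:: 148; 11; 28; 82]; [:: 149; 31; 72; 91]; [:: 149; 9; 42; 103]; [:: 149; 20; 68; 115];
      [:: 150; 43; 99; 123]; [:: 150; 24; 35; 57]; [:: 150; 12; 77; 89]; [:: 151; 9; 64; 79];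
      [:: 151; 44; 89; 99]; [:: 151; 20; 40; 118]; [:: 152; 52; 71; 120]; [:: 152; 5; 89; 109];
      [:: 152; 25; 35; 56]; [:: 153; 69; 78; 85]; [:: 153; 27; 105; 116]; [:: 153; 0; 28; 50];
      [:: 154; 26; 67; 92]; [:: 154; 48; 73; 107]; [:: 154; 10; 39; 120]; [:: 155; 13; 64; 106];
      [:: 155; 15; 86; 125]; [:: 155; 36; 50; 73]; [:: 156; 1; 63; 112]; [:: 156; 42; 84; 102];
      [:: 156; 25; 41; 70]; [:: 157; 0; 20; 35]; [:: 157; 44; 58; 106]; [:: 157; 80; 94; 113];
      [:: 158; 36; 107; 120]; [:: 158; 13; 65; 92]; [:: 158; 14; 50; 81]; [:: 159; 11; 18; 55];
      [:: 159; 28; 93; 98]; [:: 159; 64; 82; 123]; [:: 160; 33; 79; 107]; [:: 160; 6; 54; 86];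
      [:: 160; 14; 63; 118]; [:: 161; 7; 39; 66]; [:: 161; 16; 97; 110]; [:: 161; 50; 77; 122];
      [:: 162; 36; 46; 98]; [:: 162; 60; 71; 125]; [:: 162; 3; 15; 92]; [:: 163; 18; 49; 90];
      [:: 163; 12; 81; 124]; [:: 163; 32; 58; 101]; [:: 21; 35; 89; 123]; [:: 2; 97; 108; 120];
      [:: 5; 47; 59; 83]; [:: 13; 33; 42; 89]; [:: 21; 58; 77; 90]; [:: 26; 51; 86; 113];
      [:: 65; 71; 101; 123]; [:: 40; 47; 101; 116]; [:: 52; 57; 70; 86]; [:: 16; 35; 74; 94];
      [:: 0; 39; 98; 119]; [:: 40; 45; 60; 98]; [:: 33; 80; 90; 98]; [:: 1; 18; 62; 118];
      [:: 23; 73; 99; 115]; [:: 48; 66; 82; 86]; [:: 27; 66; 97; 98]; [:: 4; 40; 78; 89];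
      [:: 12; 25; 86; 107]; [:: 10; 20; 29; 49]; [:: 29; 54; 60; 114]; [:: 9; 33; 46; 116];
      [:: 3; 19; 70; 118]; [:: 9; 47; 69; 77]; [:: 35; 64; 103; 121]; [:: 13; 14; 56; 100];
      [:: 15; 43; 83; 106]].

Definition base_9_41 : seq (seq nat) :=
  [:: [:: 126; 80; 93; 101]; [:: 126; 17; 42; 68]; [:: 126; 24; 54; 115]; [:: 126; 59; 72; 125];
      [:: 126; 8; 38; 90]; [:: 126; 2; 34; 107]; [:: 127; 12; 25; 118]; [:: 127; 43; 77; 87];
      [:: 127; 0; 35; 121]; [:: 127; 19; 96; 102]; [:: 127; 59; 74; 106]; [:: 127; 30; 54; 64];
      [:: 128; 0; 64; 100]; [:: 128; 37; 48; 86]; [:: 128; 13; 24; 59]; [:: 128; 15; 82; 113];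
      [:: 128; 28; 110; 120]; [:: 128; 55; 75; 95]; [:: 129; 13; 71; 101]; [:: 129; 5; 16; 53];
      [:: 129; 41; 65; 77]; [:: 129; 45; 86; 122]; [:: 129; 23; 105; 118]; [:: 129; 30; 60; 94];
      [:: 130; 24; 111; 123]; [:: 130; 54; 66; 72]; [:: 130; 35; 47; 90]; [:: 130; 4; 28; 112];
      [:: 130; 8; 57; 100]; [:: 130; 14; 82; 92]; [:: 131; 4; 51; 106]; [:: 131; 10; 65; 91];
      [:: 131; 26; 62; 77]; [:: 131; 14; 40; 75]; [:: 131; 30; 47; 115]; [:: 131; 86; 98; 119];
      [:: 132; 48; 97; 121]; [:: 132; 39; 109; 118]; [:: 132; 71; 89; 102]; [:: 132; 15; 53; 58];
      [:: 132; 7; 30; 65]; [:: 132; 5; 23; 77]; [:: 133; 72; 96; 110]; [:: 133; 2; 29; 90];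
      [:: 133; 26; 36; 59]; [:: 133; 49; 101; 115]; [:: 133; 42; 63; 124]; [:: 133; 13; 14; 83];
      [:: 134; 62; 73; 110]; [:: 134; 8; 29; 91]; [:: 134; 3; 45; 78]; [:: 134; 18; 63; 123];
      [:: 134; 85; 102; 115]; [:: 134; 22; 40; 51]; [:: 135; 12; 55; 122]; [:: 135; 66; 80; 117];
      [:: 135; 24; 74; 89]; [:: 135; 31; 42; 105]; [:: 135; 58; 91; 100]; [:: 135; 3; 16; 37];
      [:: 136; 15; 40; 99]; [:: 136; 52; 59; 116]; [:: 136; 3; 73; 85]; [:: 136; 7; 63; 106];
      [:: 136; 26; 33; 83]; [:: 136; 48; 93; 122]; [:: 137; 69; 106; 116]; [:: 137; 10; 29; 73];
      [:: 137; 62; 80; 99]; [:: 137; 16; 44; 91]; [:: 137; 22; 38; 122]; [:: 137; 2; 54; 86];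
      [:: 138; 67; 98; 124]; [:: 138; 10; 57; 87]; [:: 138; 23; 72; 113]; [:: 138; 3; 49; 94];
      [:: 138; 14; 31; 78]; [:: 138; 41; 48; 109]; [:: 139; 30; 75; 88]; [:: 139; 20; 106; 121];
      [:: 139; 50; 80; 96]; [:: 139; 7; 68; 101]; [:: 139; 25; 39; 48]; [:: 139; 6; 60; 115];
      [:: 140; 11; 37; 93]; [:: 140; 0; 58; 111]; [:: 140; 26; 73; 118]; [:: 140; 45; 65; 80];
      [:: 140; 29; 50; 99]; [:: 140; 17; 86; 121]; [:: 141; 5; 82; 116]; [:: 141; 56; 105; 119];
      [:: 141; 34; 64; 99]; [:: 141; 8; 24; 75]; [:: 141; 41; 54; 95]; [:: 141; 17; 43; 89];
      [:: 142; 8; 25; 92]; [:: 142; 32; 59; 120]; [:: 142; 50; 66; 79]; [:: 142; 86; 111; 115];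
      [:: 142; 1; 39; 73]; [:: 142; 19; 42; 104]; [:: 143; 11; 20; 96]; [:: 143; 30; 49; 107];
      [:: 143; 35; 43; 116]; [:: 143; 26; 72; 89]; [:: 143; 60; 101; 125]; [:: 143; 5; 66; 83];
      [:: 144; 17; 51; 59]; [:: 144; 6; 89; 105]; [:: 144; 45; 72; 104]; [:: 144; 32; 91; 114];
      [:: 144; 13; 79; 119]; [:: 144; 27; 40; 67]; [:: 145; 17; 63; 84]; [:: 145; 52; 76; 115];
      [:: 145; 25; 81; 120]; [:: 145; 2; 30; 103]; [:: 145; 12; 44; 57]; [:: 145; 36; 96; 105];
      [:: 146; 63; 86; 112]; [:: 146; 29; 49; 62]; [:: 146; 12; 39; 103]; [:: 146; 43; 76; 91];
      [:: 146; 14; 79; 111]; [:: 146; 5; 22; 123]; [:: 147; 78; 92; 117]; [:: 147; 19; 54; 98];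
      [:: 147; 8; 23; 67]; [:: 147; 4; 43; 107]; [:: 147; 30; 90; 124]; [:: 147; 41; 58; 70];
      [:: 148; 5; 35; 124]; [:: 148; 8; 15; 104]; [:: 148; 32; 75; 115]; [:: 148; 25; 66; 77];
      [:: 148; 55; 58; 85]; [:: 148; 45; 95; 107]; [:: 149; 65; 81; 111]; [:: 149; 0; 73; 117];
      [:: 149; 26; 51; 99]; [:: 149; 13; 46; 125]; [:: 149; 37; 59; 84]; [:: 149; 14; 33; 94];
      [:: 150; 11; 80; 107]; [:: 150; 38; 97; 123]; [:: 150; 3; 19; 43]; [:: 150; 29; 69; 117];
      [:: 150; 21; 60; 89]; [:: 150; 49; 70; 103]; [:: 151; 16; 43; 108]; [:: 151; 25; 97; 112];
      [:: 151; 6; 55; 82]; [:: 151; 9; 38; 89]; [:: 151; 29; 61; 100]; [:: 151; 63; 71; 125];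
      [:: 152; 41; 83; 101]; [:: 152; 2; 22; 95]; [:: 152; 51; 69; 121]; [:: 152; 30; 76; 109];
      [:: 152; 10; 15; 112]; [:: 152; 43; 61; 85]; [:: 153; 26; 60; 79]; [:: 153; 7; 38; 93];
      [:: 153; 54; 76; 111]; [:: 153; 0; 44; 122]; [:: 153; 88; 102; 113]; [:: 153; 16; 32; 63];
      [:: 154; 10; 30; 82]; [:: 154; 27; 54; 123]; [:: 154; 15; 39; 60]; [:: 154; 93; 110; 117];
      [:: 154; 43; 74; 101]; [:: 154; 5; 63; 85]; [:: 155; 12; 43; 73]; [:: 155; 41; 64; 91];
      [:: 155; 14; 29; 115]; [:: 155; 52; 80; 85]; [:: 155; 24; 62; 105]; [:: 155; 5; 104; 122];
      [:: 156; 29; 76; 94]; [:: 156; 55; 80; 109]; [:: 156; 5; 21; 103]; [:: 156; 18; 57; 121];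
      [:: 156; 13; 48; 118]; [:: 156; 35; 68; 85]; [:: 157; 18; 40; 73]; [:: 157; 49; 64; 90];
      [:: 157; 10; 24; 61]; [:: 157; 33; 82; 123]; [:: 157; 6; 95; 106]; [:: 157; 44; 98; 115];
      [:: 158; 82; 94; 119]; [:: 158; 0; 33; 51]; [:: 158; 12; 18; 109]; [:: 158; 35; 60; 88];
      [:: 158; 21; 76; 104]; [:: 158; 46; 63; 113]; [:: 159; 12; 83; 98]; [:: 159; 48; 64; 73];
      [:: 159; 35; 49; 109]; [:: 159; 60; 97; 116]; [:: 159; 20; 33; 90]; [:: 159; 3; 25; 123];
      [:: 160; 65; 107; 123]; [:: 160; 21; 52; 96]; [:: 160; 62; 79; 88]; [:: 160; 40; 103; 118];
      [:: 160; 12; 34; 46]; [:: 160; 3; 17; 70]; [:: 161; 74; 88; 119]; [:: 161; 41; 78; 102];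
      [:: 161; 19; 30; 59]; [:: 161; 69; 94; 107]; [:: 161; 0; 21; 45]; [:: 161; 12; 50; 115];
      [:: 162; 38; 70; 111]; [:: 162; 19; 78; 85]; [:: 162; 2; 43; 65]; [:: 162; 92; 103; 119];
      [:: 162; 10; 49; 58]; [:: 162; 27; 29; 116]; [:: 163; 41; 79; 105]; [:: 163; 42; 102; 118];
      [:: 163; 16; 74; 125]; [:: 163; 13; 31; 54]; [:: 163; 6; 62; 91]; [:: 163; 27; 66; 84];
      [:: 164; 13; 56; 117]; [:: 164; 14; 53; 89]; [:: 164; 44; 81; 101]; [:: 164; 41; 72; 121];
      [:: 164; 26; 96; 111]; [:: 164; 1; 31; 63]; [:: 165; 30; 86; 108]; [:: 165; 6; 35; 118];
      [:: 165; 43; 62; 94]; [:: 165; 27; 65; 99]; [:: 165; 10; 20; 72]; [:: 165; 55; 81; 123];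
      [:: 166; 25; 33; 47]; [:: 166; 19; 99; 119]; [:: 166; 36; 83; 94]; [:: 166; 59; 111; 112];
      [:: 166; 7; 54; 85]; [:: 166; 4; 63; 75]; [:: 66; 76; 97; 118]; [:: 38; 55; 79; 115];
      [:: 25; 31; 67; 99]; [:: 7; 86; 107; 125]; [:: 34; 80; 86; 123]; [:: 1; 16; 87; 115];
      [:: 42; 56; 70; 125]; [:: 2; 52; 87; 98]; [:: 32; 80; 95; 125]; [:: 12; 29; 42; 71];
      [:: 8; 65; 72; 95]; [:: 7; 18; 81; 105]; [:: 22; 32; 48; 108]; [:: 25; 80; 84; 108];
      [:: 13; 41; 66; 122]; [:: 8; 50; 109; 122]; [:: 51; 62; 93; 113]; [:: 16; 57; 73; 116];
      [:: 19; 55; 69; 91]; [:: 19; 52; 75; 125]; [:: 27; 35; 48; 104]; [:: 4; 14; 37; 117];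
      [:: 0; 19; 67; 108]; [:: 83; 84; 99; 118]; [:: 1; 27; 96; 124]; [:: 0; 43; 60; 81];
      [:: 3; 35; 62; 72]; [:: 0; 75; 94; 104]; [:: 33; 57; 102; 124]; [:: 15; 44; 59; 110];
      [:: 8; 84; 110; 115]; [:: 0; 62; 97; 102]; [:: 18; 38; 67; 113]; [:: 10; 22; 84; 100];
      [:: 68; 72; 88; 108]; [:: 41; 44; 60; 80]; [:: 24; 28; 50; 76]; [:: 4; 33; 61; 77];
      [:: 9; 45; 77; 117]; [:: 25; 37; 53; 109]; [:: 40; 55; 68; 98]; [:: 9; 41; 53; 124];
      [:: 27; 45; 63; 91]; [:: 25; 30; 45; 85]; [:: 19; 33; 93; 100]].

Definition base_9_44 : seq (seq nat) :=
  [:: [:: 126; 24; 35; 83]; [:: 126; 5; 47; 109]; [:: 126; 65; 86; 113]; [:: 127; 24; 46; 73];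
      [:: 127; 33; 62; 94]; [:: 127; 4; 111; 123]; [:: 128; 8; 91; 99]; [:: 128; 41; 73; 117];
      [:: 128; 14; 42; 60]; [:: 129; 43; 57; 76]; [:: 129; 25; 86; 122]; [:: 129; 4; 33; 104];
      [:: 130; 3; 67; 118]; [:: 130; 50; 71; 97]; [:: 130; 16; 29; 104]; [:: 131; 61; 75; 91];
      [:: 131; 14; 35; 44]; [:: 131; 7; 104; 120]; [:: 132; 3; 33; 50]; [:: 132; 22; 64; 84];
      [:: 132; 74; 111; 114]; [:: 133; 2; 88; 125]; [:: 133; 33; 71; 106]; [:: 133; 16; 51; 60];
      [:: 134; 46; 71; 119]; [:: 134; 7; 34; 97]; [:: 134; 23; 64; 106]; [:: 135; 41; 94; 118];
      [:: 135; 49; 83; 105]; [:: 135; 11; 22; 56]; [:: 136; 93; 111; 118]; [:: 136; 1; 18; 47];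
      [:: 136; 37; 57; 80]; [:: 137; 32; 69; 113]; [:: 137; 51; 95; 102]; [:: 137; 1; 14; 76];
      [:: 138; 8; 53; 122]; [:: 138; 68; 74; 102]; [:: 138; 18; 33; 90]; [:: 139; 7; 26; 32];
      [:: 139; 59; 92; 108]; [:: 139; 50; 81; 117]; [:: 140; 47; 76; 87]; [:: 140; 19; 38; 100];
      [:: 140; 5; 56; 115]; [:: 141; 30; 57; 88]; [:: 141; 75; 101; 121]; [:: 141; 4; 24; 43];
      [:: 142; 40; 68; 96]; [:: 142; 4; 53; 76]; [:: 142; 17; 103; 118]; [:: 143; 37; 49; 88];
      [:: 143; 60; 75; 105]; [:: 143; 1; 15; 123]; [:: 144; 0; 44; 110]; [:: 144; 14; 67; 119];
      [:: 144; 38; 78; 86]; [:: 145; 5; 89; 108]; [:: 145; 17; 35; 71]; [:: 145; 45; 58; 121];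
      [:: 146; 25; 110; 120]; [:: 146; 33; 51; 66]; [:: 146; 13; 82; 95]; [:: 147; 8; 29; 89];
      [:: 147; 53; 61; 79]; [:: 147; 25; 101; 115]; [:: 148; 20; 57; 107]; [:: 148; 11; 28; 75];
      [:: 148; 55; 96; 125]; [:: 149; 82; 85; 102]; [:: 149; 6; 40; 123]; [:: 149; 21; 55; 66];
      [:: 150; 20; 36; 80]; [:: 150; 13; 56; 111]; [:: 150; 46; 96; 117]; [:: 151; 67; 79; 124];
      [:: 151; 7; 14; 85]; [:: 151; 30; 46; 110]; [:: 152; 39; 52; 99]; [:: 152; 13; 21; 86];
      [:: 152; 57; 74; 113]; [:: 153; 44; 61; 82]; [:: 153; 13; 36; 125]; [:: 153; 14; 96; 106];
      [:: 154; 11; 51; 58]; [:: 154; 35; 70; 102]; [:: 154; 23; 87; 115]; [:: 155; 2; 50; 104];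
      [:: 155; 20; 70; 90]; [:: 155; 30; 62; 122]; [:: 156; 23; 37; 74]; [:: 156; 52; 84; 116];
      [:: 156; 6; 66; 105]; [:: 157; 53; 87; 102]; [:: 157; 22; 30; 83]; [:: 157; 7; 61; 125];
      [:: 158; 26; 106; 114]; [:: 158; 35; 65; 90]; [:: 158; 5; 48; 70]; [:: 159; 46; 89; 120];
      [:: 159; 11; 73; 98]; [:: 159; 20; 30; 69]; [:: 160; 36; 46; 95]; [:: 160; 22; 78; 125];
      [:: 160; 2; 57; 111]; [:: 161; 24; 81; 122]; [:: 161; 9; 46; 84]; [:: 161; 29; 65; 98];
      [:: 162; 43; 62; 123]; [:: 162; 16; 28; 98]; [:: 162; 6; 72; 86]; [:: 163; 25; 51; 63];
      [:: 163; 9; 37; 125]; [:: 163; 83; 93; 102]; [:: 164; 23; 47; 102]; [:: 164; 35; 59; 114];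
      [:: 164; 3; 70; 91]; [:: 165; 7; 70; 99]; [:: 165; 41; 48; 123]; [:: 165; 26; 66; 95];
      [:: 166; 32; 111; 116]; [:: 166; 3; 61; 77]; [:: 166; 21; 46; 88]; [:: 167; 26; 92; 103];
      [:: 167; 6; 69; 77]; [:: 167; 31; 51; 116]; [:: 168; 11; 35; 49]; [:: 168; 61; 74; 97];
      [:: 168; 25; 109; 118]; [:: 169; 34; 86; 120]; [:: 169; 11; 15; 81]; [:: 169; 54; 56; 100];
      [:: 5; 14; 55; 61]; [:: 39; 50; 60; 103]; [:: 67; 78; 93; 105]; [:: 3; 15; 88; 114];
      [:: 1; 37; 63; 109]; [:: 24; 67; 77; 120]; [:: 28; 43; 73; 115]; [:: 3; 27; 36; 44];
      [:: 23; 46; 78; 97]; [:: 51; 79; 110; 114]; [:: 40; 57; 94; 108]; [:: 33; 52; 97; 110];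
      [:: 0; 16; 66; 93]; [:: 14; 46; 103; 114]; [:: 2; 28; 70; 122]; [:: 10; 25; 28; 83];
      [:: 72; 90; 110; 123]; [:: 6; 59; 97; 113]].

Definition base_9_47 : seq (seq nat) :=
  [:: [:: 126; 13; 25; 37]; [:: 126; 54; 67; 79]; [:: 126; 91; 110; 122]; [:: 126; 2; 57; 115];
      [:: 126; 16; 73; 88]; [:: 126; 29; 42; 102]; [:: 127; 10; 15; 34]; [:: 127; 55; 58; 72];
      [:: 127; 96; 104; 115]; [:: 127; 4; 63; 120]; [:: 127; 25; 81; 88]; [:: 127; 37; 43; 110];
      [:: 128; 5; 24; 30]; [:: 128; 44; 67; 74]; [:: 128; 87; 105; 114]; [:: 128; 10; 61; 123];
      [:: 128; 18; 79; 92]; [:: 128; 39; 51; 102]; [:: 129; 6; 16; 38]; [:: 129; 42; 61; 81];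
      [:: 129; 86; 98; 120]; [:: 129; 7; 64; 112]; [:: 129; 24; 70; 97]; [:: 129; 32; 50; 109];
      [:: 130; 8; 53; 91]; [:: 130; 25; 65; 110]; [:: 130; 35; 79; 119]; [:: 130; 1; 70; 99];
      [:: 130; 20; 45; 118]; [:: 130; 32; 62; 85]; [:: 131; 7; 48; 87]; [:: 131; 25; 56; 101];
      [:: 131; 36; 72; 117]; [:: 131; 4; 78; 110]; [:: 131; 18; 52; 122]; [:: 131; 30; 64; 97];
      [:: 132; 0; 51; 84]; [:: 132; 20; 68; 100]; [:: 132; 29; 83; 116]; [:: 132; 10; 76; 110];
      [:: 132; 27; 42; 124]; [:: 132; 40; 62; 91]; [:: 133; 3; 44; 95]; [:: 133; 18; 62; 111];
      [:: 133; 30; 75; 124]; [:: 133; 13; 81; 104]; [:: 133; 27; 52; 117]; [:: 133; 41; 63; 85];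
      [:: 134; 13; 22; 36]; [:: 134; 53; 65; 81]; [:: 134; 95; 109; 120]; [:: 134; 5; 58; 117];
      [:: 134; 19; 73; 90]; [:: 134; 31; 46; 100]; [:: 135; 11; 14; 32]; [:: 135; 55; 59; 71];
      [:: 135; 97; 103; 118]; [:: 135; 0; 64; 124]; [:: 135; 22; 83; 87]; [:: 135; 39; 42; 111];
      [:: 136; 1; 22; 32]; [:: 136; 45; 67; 76]; [:: 136; 89; 105; 113]; [:: 136; 9; 61; 120];
      [:: 136; 19; 83; 97]; [:: 136; 38; 52; 104]; [:: 137; 2; 20; 36]; [:: 137; 48; 61; 78];
      [:: 137; 84; 104; 123]; [:: 137; 8; 64; 115]; [:: 137; 27; 70; 95]; [:: 137; 28; 54; 111];
      [:: 138; 11; 51; 91]; [:: 138; 23; 64; 107]; [:: 138; 36; 81; 119]; [:: 138; 2; 74; 98];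
      [:: 138; 17; 43; 114]; [:: 138; 30; 58; 85]; [:: 139; 13; 42; 87]; [:: 139; 25; 58; 99];
      [:: 139; 41; 76; 116]; [:: 139; 3; 79; 106]; [:: 139; 16; 55; 119]; [:: 139; 32; 67; 95];
      [:: 140; 0; 50; 87]; [:: 140; 18; 64; 102]; [:: 140; 29; 77; 118]; [:: 140; 8; 73; 111];
      [:: 140; 26; 42; 120]; [:: 140; 40; 59; 93]; [:: 141; 1; 46; 95]; [:: 141; 17; 62; 109];
      [:: 141; 33; 75; 119]; [:: 141; 7; 79; 103]; [:: 141; 25; 51; 113]; [:: 141; 36; 64; 84];
      [:: 142; 12; 27; 37]; [:: 142; 51; 67; 78]; [:: 142; 96; 106; 123]; [:: 142; 5; 62; 116];
      [:: 142; 18; 74; 88]; [:: 142; 32; 44; 99]; [:: 143; 12; 18; 31]; [:: 143; 49; 58; 76];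
      [:: 143; 96; 101; 114]; [:: 143; 4; 67; 119]; [:: 143; 24; 81; 84]; [:: 143; 36; 48; 111];
      [:: 144; 2; 22; 30]; [:: 144; 44; 64; 76]; [:: 144; 88; 105; 118]; [:: 144; 10; 57; 125];
      [:: 144; 17; 79; 94]; [:: 144; 35; 53; 99]; [:: 145; 2; 14; 38]; [:: 145; 42; 60; 78];
      [:: 145; 89; 103; 119]; [:: 145; 8; 67; 114]; [:: 145; 26; 74; 95]; [:: 145; 28; 50; 106];
      [:: 146; 7; 50; 93]; [:: 146; 27; 65; 106]; [:: 146; 36; 79; 125]; [:: 146; 0; 75; 102];
      [:: 146; 17; 46; 118]; [:: 146; 31; 57; 88]; [:: 147; 11; 44; 88]; [:: 147; 21; 56; 100];
      [:: 147; 39; 71; 115]; [:: 147; 5; 78; 109]; [:: 147; 16; 51; 124]; [:: 147; 31; 68; 92];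
      [:: 148; 2; 50; 84]; [:: 148; 19; 63; 98]; [:: 148; 29; 78; 115]; [:: 148; 9; 70; 106];
      [:: 148; 26; 45; 121]; [:: 148; 39; 56; 93]; [:: 149; 0; 47; 93]; [:: 149; 16; 59; 105];
      [:: 149; 28; 76; 119]; [:: 149; 8; 82; 100]; [:: 149; 26; 49; 117]; [:: 149; 41; 68; 87];
      [:: 150; 7; 25; 40]; [:: 150; 53; 64; 79]; [:: 150; 92; 107; 120]; [:: 150; 4; 56; 112];
      [:: 150; 15; 75; 88]; [:: 150; 29; 43; 100]; [:: 151; 7; 15; 32]; [:: 151; 50; 57; 72];
      [:: 151; 97; 104; 113]; [:: 151; 3; 68; 124]; [:: 151; 27; 80; 89]; [:: 151; 40; 48; 109];
      [:: 152; 4; 27; 31]; [:: 152; 46; 65; 75]; [:: 152; 88; 107; 117]; [:: 152; 12; 58; 122];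
      [:: 152; 17; 80; 97]; [:: 152; 41; 49; 103]; [:: 153; 6; 14; 41]; [:: 153; 45; 60; 83];
      [:: 153; 87; 104; 122]; [:: 153; 9; 69; 112]; [:: 153; 26; 71; 93]; [:: 153; 28; 52; 107];
      [:: 154; 7; 49; 91]; [:: 154; 27; 66; 110]; [:: 154; 39; 80; 124]; [:: 154; 3; 70; 102];
      [:: 154; 19; 46; 115]; [:: 154; 30; 57; 86]; [:: 155; 7; 45; 86]; [:: 155; 21; 58; 98];
      [:: 155; 41; 72; 114]; [:: 155; 0; 77; 107]; [:: 155; 18; 55; 124]; [:: 155; 32; 64; 94];
      [:: 156; 3; 50; 86]; [:: 156; 14; 66; 103]; [:: 156; 32; 77; 116]; [:: 156; 10; 70; 105];
      [:: 156; 22; 42; 122]; [:: 156; 35; 60; 91]; [:: 157; 2; 48; 91]; [:: 157; 20; 61; 111];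
      [:: 157; 33; 76; 121]; [:: 157; 12; 83; 98]; [:: 157; 22; 51; 115]; [:: 157; 38; 64; 85];
      [:: 158; 13; 27; 40]; [:: 158; 49; 64; 78]; [:: 158; 91; 109; 124]; [:: 158; 2; 58; 118];
      [:: 158; 16; 75; 84]; [:: 158; 29; 47; 99]; [:: 159; 10; 19; 33]; [:: 159; 51; 59; 76];
      [:: 159; 92; 102; 114]; [:: 159; 4; 65; 123]; [:: 159; 24; 82; 88]; [:: 159; 41; 43; 108];
      [:: 160; 6; 24; 29]; [:: 160; 47; 64; 75]; [:: 160; 84; 111; 116]; [:: 160; 11; 60; 125];
      [:: 160; 14; 81; 97]; [:: 160; 35; 52; 100]; [:: 161; 0; 14; 40]; [:: 161; 45; 59; 80];
      [:: 161; 84; 100; 124]; [:: 161; 10; 65; 118]; [:: 161; 22; 71; 94]; [:: 161; 28; 49; 109];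
      [:: 162; 10; 51; 95]; [:: 162; 22; 64; 111]; [:: 162; 36; 82; 123]; [:: 162; 5; 76; 102];
      [:: 162; 14; 44; 114]; [:: 162; 29; 58; 90]; [:: 163; 7; 42; 89]; [:: 163; 23; 57; 103];
      [:: 163; 35; 72; 113]; [:: 163; 4; 83; 109]; [:: 163; 17; 50; 122]; [:: 163; 32; 65; 97];
      [:: 164; 2; 55; 90]; [:: 164; 17; 64; 98]; [:: 164; 32; 82; 113]; [:: 164; 7; 76; 108];
      [:: 164; 21; 46; 120]; [:: 164; 37; 57; 92]; [:: 165; 3; 46; 94]; [:: 165; 15; 61; 105];
      [:: 165; 33; 70; 123]; [:: 165; 13; 82; 103]; [:: 165; 22; 50; 116]; [:: 165; 41; 65; 90];
      [:: 166; 6; 48; 84]; [:: 166; 50; 67; 80]; [:: 166; 8; 28; 120]; [:: 166; 17; 38; 72];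
      [:: 166; 21; 57; 99]; [:: 166; 91; 111; 115]; [:: 167; 54; 73; 85]; [:: 167; 10; 47; 68];
      [:: 167; 92; 101; 121]; [:: 167; 1; 38; 115]; [:: 167; 23; 32; 78]; [:: 167; 14; 56; 108];
      [:: 168; 8; 15; 84]; [:: 168; 36; 49; 107]; [:: 168; 1; 25; 96]; [:: 168; 28; 44; 100];
      [:: 168; 66; 72; 120]; [:: 168; 59; 81; 116]; [:: 169; 12; 22; 40]; [:: 169; 0; 52; 58];
      [:: 169; 90; 105; 121]; [:: 169; 16; 65; 101]; [:: 169; 45; 78; 97]; [:: 169; 34; 74; 117];
      [:: 170; 31; 56; 89]; [:: 170; 11; 81; 109]; [:: 170; 22; 53; 120]; [:: 170; 2; 75; 103];
      [:: 170; 41; 64; 91]; [:: 170; 19; 47; 114]; [:: 171; 6; 76; 99]; [:: 171; 14; 45; 113];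
      [:: 171; 29; 60; 88]; [:: 171; 8; 21; 37]; [:: 171; 52; 66; 83]; [:: 171; 94; 110; 124];
      [:: 172; 6; 43; 85]; [:: 172; 31; 70; 116]; [:: 172; 18; 58; 101]; [:: 172; 8; 69; 124];
      [:: 172; 23; 82; 93]; [:: 172; 35; 51; 105]; [:: 1; 17; 83; 119]; [:: 17; 33; 53; 92];
      [:: 5; 31; 67; 106]; [:: 41; 48; 57; 120]; [:: 7; 62; 71; 95]; [:: 25; 42; 76; 106];
      [:: 40; 82; 90; 101]; [:: 9; 55; 104; 118]; [:: 21; 65; 89; 117]; [:: 3; 16; 81; 123];
      [:: 16; 31; 54; 95]; [:: 6; 28; 66; 108]; [:: 36; 47; 57; 124]; [:: 13; 56; 76; 95];
      [:: 24; 45; 71; 111]; [:: 38; 78; 90; 98]; [:: 12; 49; 99; 116]; [:: 25; 68; 84; 117];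
      [:: 12; 34; 44; 78]; [:: 6; 21; 55; 60]; [:: 15; 40; 65; 73]; [:: 49; 70; 88; 124];
      [:: 42; 67; 96; 100]; [:: 58; 77; 106; 113]; [:: 6; 37; 96; 116]; [:: 13; 17; 84; 105];
      [:: 25; 32; 100; 121]].

Definition base_9_50 : seq (seq nat) :=
  [:: [:: 126; 82; 107; 116]; [:: 126; 16; 38; 95]; [:: 126; 6; 49; 56]; [:: 127; 39; 76; 112];
      [:: 127; 5; 64; 108]; [:: 127; 25; 51; 92]; [:: 128; 38; 55; 112]; [:: 128; 27; 56; 96];
      [:: 128; 12; 78; 105]; [:: 129; 4; 42; 104]; [:: 129; 24; 79; 92]; [:: 129; 38; 57; 122];
      [:: 130; 36; 55; 85]; [:: 130; 11; 20; 101]; [:: 130; 65; 79; 120]; [:: 131; 6; 38; 74];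
      [:: 131; 26; 105; 115]; [:: 131; 45; 64; 97]; [:: 132; 11; 50; 67]; [:: 132; 38; 72; 102];
      [:: 132; 21; 85; 118]; [:: 133; 6; 85; 122]; [:: 133; 16; 30; 65]; [:: 133; 47; 72; 103];
      [:: 134; 5; 19; 29]; [:: 134; 57; 110; 113]; [:: 134; 44; 74; 89]; [:: 135; 60; 79; 97];
      [:: 135; 7; 49; 101]; [:: 135; 26; 30; 125]; [:: 136; 19; 61; 71]; [:: 136; 38; 84; 115];
      [:: 136; 3; 44; 104]; [:: 137; 25; 48; 98]; [:: 137; 31; 75; 117]; [:: 137; 9; 63; 87];
      [:: 138; 39; 100; 114]; [:: 138; 0; 27; 65]; [:: 138; 42; 75; 96]; [:: 139; 21; 83; 94];
      [:: 139; 34; 65; 102]; [:: 139; 6; 54; 115]; [:: 140; 4; 102; 117]; [:: 140; 19; 73; 90];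
      [:: 140; 30; 42; 67]; [:: 141; 22; 52; 81]; [:: 141; 13; 60; 105]; [:: 141; 32; 90; 117];
      [:: 142; 11; 106; 117]; [:: 142; 23; 42; 89]; [:: 142; 33; 69; 72]; [:: 143; 2; 30; 68];
      [:: 143; 42; 73; 85]; [:: 143; 17; 106; 113]; [:: 144; 6; 21; 68]; [:: 144; 42; 82; 114];
      [:: 144; 36; 89; 98]; [:: 145; 46; 69; 109]; [:: 145; 13; 39; 90]; [:: 145; 15; 80; 124];
      [:: 146; 4; 24; 61]; [:: 146; 38; 93; 105]; [:: 146; 43; 77; 116]; [:: 147; 29; 70; 102];
      [:: 147; 0; 46; 94]; [:: 147; 27; 68; 121]; [:: 148; 0; 24; 84]; [:: 148; 35; 49; 77];
      [:: 148; 63; 98; 125]; [:: 149; 25; 50; 101]; [:: 149; 3; 30; 86]; [:: 149; 66; 81; 116];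
      [:: 150; 25; 34; 61]; [:: 150; 48; 83; 112]; [:: 150; 6; 92; 103]; [:: 151; 21; 40; 103];
      [:: 151; 74; 96; 112]; [:: 151; 5; 42; 68]; [:: 152; 8; 38; 44]; [:: 152; 69; 86; 114];
      [:: 152; 24; 74; 107]; [:: 153; 64; 82; 111]; [:: 153; 28; 55; 90]; [:: 153; 0; 25; 118];
      [:: 154; 5; 28; 94]; [:: 154; 48; 62; 103]; [:: 154; 16; 73; 118]; [:: 155; 74; 88; 102];
      [:: 155; 13; 18; 38]; [:: 155; 48; 61; 113]; [:: 156; 12; 24; 70]; [:: 156; 57; 85; 100];
      [:: 156; 29; 52; 121]; [:: 157; 63; 79; 101]; [:: 157; 4; 49; 123]; [:: 157; 16; 28; 92];
      [:: 158; 85; 101; 117]; [:: 158; 13; 30; 73]; [:: 158; 24; 52; 58]; [:: 159; 53; 57; 92];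
      [:: 159; 6; 77; 114]; [:: 159; 24; 37; 108]; [:: 160; 30; 64; 77]; [:: 160; 54; 86; 121];
      [:: 160; 6; 22; 102]; [:: 161; 38; 67; 103]; [:: 161; 2; 49; 71]; [:: 161; 22; 85; 114];
      [:: 162; 36; 68; 102]; [:: 162; 19; 51; 75]; [:: 162; 1; 86; 125]; [:: 163; 35; 65; 94];
      [:: 163; 18; 104; 123]; [:: 163; 6; 50; 82]; [:: 164; 41; 52; 120]; [:: 164; 18; 57; 93];
      [:: 164; 7; 72; 109]; [:: 165; 72; 88; 110]; [:: 165; 10; 29; 68]; [:: 165; 27; 44; 114];
      [:: 166; 2; 24; 51]; [:: 166; 39; 67; 79]; [:: 166; 86; 104; 124]; [:: 167; 48; 85; 106];
      [:: 167; 8; 68; 125]; [:: 167; 27; 29; 74]; [:: 168; 26; 33; 55]; [:: 168; 62; 71; 125];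
      [:: 168; 7; 88; 98]; [:: 169; 2; 19; 117]; [:: 169; 64; 70; 89]; [:: 169; 35; 45; 104];
      [:: 170; 41; 99; 117]; [:: 170; 19; 54; 64]; [:: 170; 2; 75; 84]; [:: 171; 36; 51; 74];
      [:: 171; 21; 61; 91]; [:: 171; 5; 104; 112]; [:: 172; 51; 67; 114]; [:: 172; 5; 26; 41];
      [:: 172; 70; 90; 110]; [:: 173; 10; 86; 122]; [:: 173; 14; 72; 106]; [:: 173; 40; 44; 66];
      [:: 174; 66; 86; 120]; [:: 174; 24; 44; 101]; [:: 174; 9; 38; 70]; [:: 175; 6; 41; 76];
      [:: 175; 26; 56; 116]; [:: 175; 46; 96; 99]; [:: 16; 62; 83; 104]; [:: 4; 38; 92; 118];
      [:: 32; 48; 102; 114]; [:: 18; 35; 42; 118]; [:: 9; 62; 73; 120]; [:: 27; 38; 85; 98];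
      [:: 9; 27; 49; 76]; [:: 11; 66; 74; 84]; [:: 45; 60; 87; 106]].

Definition base_9_53 : seq (seq nat) :=
  [:: [:: 126; 13; 26; 37]; [:: 126; 54; 69; 82]; [:: 126; 97; 109; 124]; [:: 126; 3; 56; 113];
      [:: 126; 17; 70; 85]; [:: 126; 33; 44; 101]; [:: 127; 13; 20; 32]; [:: 127; 52; 56; 70];
      [:: 127; 97; 101; 117]; [:: 127; 4; 63; 119]; [:: 127; 21; 83; 85]; [:: 127; 38; 43; 106];
      [:: 128; 4; 23; 34]; [:: 128; 47; 64; 71]; [:: 128; 86; 106; 114]; [:: 128; 8; 62; 121];
      [:: 128; 16; 79; 97]; [:: 128; 35; 55; 100]; [:: 129; 0; 18; 41]; [:: 129; 48; 57; 79];
      [:: 129; 86; 101; 121]; [:: 129; 12; 68; 117]; [:: 129; 25; 73; 96]; [:: 129; 28; 54; 105];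
      [:: 130; 10; 54; 94]; [:: 130; 27; 64; 107]; [:: 130; 40; 82; 123]; [:: 130; 0; 73; 104];
      [:: 130; 16; 48; 115]; [:: 130; 28; 59; 87]; [:: 131; 12; 46; 84]; [:: 131; 26; 57; 103];
      [:: 131; 37; 72; 116]; [:: 131; 4; 77; 109]; [:: 131; 15; 54; 122]; [:: 131; 33; 66; 91];
      [:: 132; 5; 53; 89]; [:: 132; 18; 63; 104]; [:: 132; 28; 82; 113]; [:: 132; 9; 72; 105];
      [:: 132; 22; 44; 123]; [:: 132; 37; 58; 94]; [:: 133; 6; 42; 96]; [:: 133; 19; 57; 109];
      [:: 133; 34; 74; 124]; [:: 133; 13; 80; 102]; [:: 133; 22; 54; 118]; [:: 133; 37; 66; 85];
      [:: 134; 12; 23; 40]; [:: 134; 51; 65; 80]; [:: 134; 97; 110; 121]; [:: 134; 5; 56; 114];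
      [:: 134; 20; 70; 90]; [:: 134; 30; 47; 100]; [:: 135; 12; 18; 34]; [:: 135; 52; 57; 74];
      [:: 135; 92; 99; 117]; [:: 135; 5; 68; 119]; [:: 135; 25; 82; 88]; [:: 135; 39; 43; 110];
      [:: 136; 4; 27; 29]; [:: 136; 47; 68; 74]; [:: 136; 88; 107; 114]; [:: 136; 12; 56; 121];
      [:: 136; 19; 83; 91]; [:: 136; 37; 55; 99]; [:: 137; 3; 19; 40]; [:: 137; 45; 56; 81];
      [:: 137; 90; 102; 124]; [:: 137; 7; 67; 113]; [:: 137; 26; 72; 92]; [:: 137; 32; 55; 111];
      [:: 138; 11; 51; 92]; [:: 138; 25; 68; 110]; [:: 138; 39; 79; 125]; [:: 138; 1; 72; 99];
      [:: 138; 17; 48; 118]; [:: 138; 30; 62; 85]; [:: 139; 8; 44; 85]; [:: 139; 26; 58; 101];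
      [:: 139; 37; 71; 113]; [:: 139; 3; 78; 105]; [:: 139; 16; 54; 119]; [:: 139; 31; 68; 94];
      [:: 140; 6; 51; 85]; [:: 140; 19; 67; 99]; [:: 140; 34; 82; 118]; [:: 140; 11; 72; 111];
      [:: 140; 21; 44; 120]; [:: 140; 36; 60; 94]; [:: 141; 3; 48; 97]; [:: 141; 19; 62; 106];
      [:: 141; 31; 73; 120]; [:: 141; 13; 78; 98]; [:: 141; 25; 53; 112]; [:: 141; 38; 63; 84];
      [:: 142; 10; 25; 37]; [:: 142; 55; 68; 80]; [:: 142; 94; 109; 119]; [:: 142; 6; 56; 118];
      [:: 142; 17; 75; 89]; [:: 142; 28; 43; 101]; [:: 143; 13; 17; 34]; [:: 143; 55; 61; 74];
      [:: 143; 93; 102; 117]; [:: 143; 1; 68; 121]; [:: 143; 27; 80; 88]; [:: 143; 39; 42; 106];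
      [:: 144; 4; 24; 32]; [:: 144; 45; 65; 74]; [:: 144; 89; 106; 116]; [:: 144; 7; 59; 121];
      [:: 144; 15; 80; 93]; [:: 144; 39; 54; 100]; [:: 145; 5; 20; 40]; [:: 145; 46; 56; 83];
      [:: 145; 84; 98; 121]; [:: 145; 10; 69; 117]; [:: 145; 23; 73; 92]; [:: 145; 33; 53; 108];
      [:: 146; 10; 55; 97]; [:: 146; 27; 69; 108]; [:: 146; 37; 80; 122]; [:: 146; 5; 75; 100];
      [:: 146; 17; 46; 112]; [:: 146; 28; 57; 88]; [:: 147; 11; 43; 85]; [:: 147; 26; 56; 98];
      [:: 147; 35; 73; 116]; [:: 147; 0; 83; 106]; [:: 147; 18; 51; 122]; [:: 147; 29; 67; 95];
      [:: 148; 0; 51; 90]; [:: 148; 14; 67; 104]; [:: 148; 34; 80; 115]; [:: 148; 8; 73; 109];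
      [:: 148; 25; 44; 125]; [:: 148; 35; 57; 97]; [:: 149; 4; 48; 93]; [:: 149; 20; 57; 106];
      [:: 149; 31; 76; 124]; [:: 149; 8; 83; 102]; [:: 149; 23; 53; 116]; [:: 149; 41; 68; 86];
      [:: 150; 7; 24; 37]; [:: 150; 50; 67; 81]; [:: 150; 91; 109; 121]; [:: 150; 5; 60; 116];
      [:: 150; 18; 73; 89]; [:: 150; 33; 46; 100]; [:: 151; 7; 16; 34]; [:: 151; 54; 56; 71];
      [:: 151; 92; 102; 114]; [:: 151; 6; 67; 124]; [:: 151; 25; 83; 90]; [:: 151; 38; 47; 108];
      [:: 152; 2; 27; 33]; [:: 152; 45; 63; 71]; [:: 152; 84; 106; 115]; [:: 152; 7; 62; 122];
      [:: 152; 15; 81; 97]; [:: 152; 37; 53; 103]; [:: 153; 0; 19; 36]; [:: 153; 44; 59; 83];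
      [:: 153; 87; 98; 123]; [:: 153; 8; 65; 116]; [:: 153; 22; 74; 96]; [:: 153; 34; 49; 110];
      [:: 154; 10; 53; 92]; [:: 154; 22; 63; 111]; [:: 154; 40; 77; 120]; [:: 154; 3; 71; 104];
      [:: 154; 14; 47; 118]; [:: 154; 28; 56; 85]; [:: 155; 8; 45; 84]; [:: 155; 23; 56; 104];
      [:: 155; 35; 75; 113]; [:: 155; 5; 77; 105]; [:: 155; 16; 51; 121]; [:: 155; 34; 66; 96];
      [:: 156; 0; 54; 85]; [:: 156; 19; 68; 104]; [:: 156; 33; 77; 116]; [:: 156; 12; 71; 109];
      [:: 156; 24; 48; 121]; [:: 156; 37; 60; 97]; [:: 157; 5; 47; 91]; [:: 157; 20; 60; 108];
      [:: 157; 30; 76; 121]; [:: 157; 13; 77; 101]; [:: 157; 26; 52; 114]; [:: 157; 41; 65; 85];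
      [:: 158; 13; 27; 35]; [:: 158; 50; 66; 83]; [:: 158; 96; 110; 124]; [:: 158; 4; 60; 112];
      [:: 158; 20; 72; 89]; [:: 158; 33; 42; 98]; [:: 159; 13; 16; 30]; [:: 159; 49; 57; 76];
      [:: 159; 97; 102; 116]; [:: 159; 0; 69; 124]; [:: 159; 21; 82; 87]; [:: 159; 36; 44; 109];
      [:: 160; 5; 22; 32]; [:: 160; 47; 66; 70]; [:: 160; 87; 110; 116]; [:: 160; 9; 59; 120];
      [:: 160; 15; 82; 92]; [:: 160; 36; 53; 100]; [:: 161; 1; 18; 40]; [:: 161; 43; 62; 78];
      [:: 161; 89; 98; 122]; [:: 161; 11; 65; 115]; [:: 161; 24; 71; 96]; [:: 161; 32; 53; 105];
      [:: 162; 9; 55; 92]; [:: 162; 25; 65; 109]; [:: 162; 38; 83; 120]; [:: 162; 2; 71; 101];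
      [:: 162; 16; 43; 112]; [:: 162; 30; 60; 86]; [:: 163; 12; 45; 85]; [:: 163; 23; 57; 101];
      [:: 163; 38; 70; 118]; [:: 163; 3; 81; 107]; [:: 163; 19; 55; 121]; [:: 163; 28; 69; 96];
      [:: 164; 4; 54; 84]; [:: 164; 20; 63; 101]; [:: 164; 29; 81; 115]; [:: 164; 8; 70; 107];
      [:: 164; 27; 45; 123]; [:: 164; 38; 57; 92]; [:: 165; 4; 45; 95]; [:: 165; 18; 60; 107];
      [:: 165; 33; 70; 121]; [:: 165; 7; 80; 98]; [:: 165; 26; 53; 118]; [:: 165; 40; 63; 87];
      [:: 166; 8; 24; 40]; [:: 166; 51; 63; 81]; [:: 166; 94; 111; 120]; [:: 166; 4; 58; 118];
      [:: 166; 16; 72; 90]; [:: 166; 30; 44; 99]; [:: 167; 12; 20; 28]; [:: 167; 53; 60; 76];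
      [:: 167; 96; 102; 112]; [:: 167; 2; 66; 125]; [:: 167; 26; 78; 88]; [:: 167; 37; 43; 109];
      [:: 168; 2; 23; 28]; [:: 168; 48; 63; 73]; [:: 168; 87; 108; 112]; [:: 168; 8; 57; 120];
      [:: 168; 17; 79; 93]; [:: 168; 35; 49; 98]; [:: 169; 5; 19; 38]; [:: 169; 48; 62; 81];
      [:: 169; 87; 100; 119]; [:: 169; 7; 69; 116]; [:: 169; 27; 71; 95]; [:: 169; 30; 55; 108];
      [:: 170; 13; 54; 92]; [:: 170; 22; 68; 108]; [:: 170; 35; 83; 123]; [:: 170; 5; 70; 98];
      [:: 170; 16; 46; 114]; [:: 170; 34; 61; 88]; [:: 171; 8; 46; 90]; [:: 171; 22; 57; 102];
      [:: 171; 35; 72; 112]; [:: 171; 1; 78; 109]; [:: 171; 18; 52; 119]; [:: 171; 33; 68; 97];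
      [:: 172; 5; 51; 86]; [:: 172; 16; 67; 100]; [:: 172; 31; 81; 118]; [:: 172; 12; 72; 107];
      [:: 172; 23; 43; 125]; [:: 172; 41; 59; 97]; [:: 173; 3; 43; 91]; [:: 173; 19; 58; 111];
      [:: 173; 30; 71; 124]; [:: 173; 10; 80; 103]; [:: 173; 22; 53; 113]; [:: 173; 39; 65; 88];
      [:: 174; 3; 42; 85]; [:: 174; 49; 67; 83]; [:: 174; 7; 32; 124]; [:: 174; 14; 39; 75];
      [:: 174; 24; 60; 100]; [:: 174; 93; 109; 114]; [:: 175; 55; 76; 88]; [:: 175; 13; 48; 64];
      [:: 175; 96; 104; 125]; [:: 175; 4; 35; 117]; [:: 175; 23; 30; 79]; [:: 175; 16; 57; 107];
      [:: 176; 10; 15; 88]; [:: 176; 36; 55; 105]; [:: 176; 2; 24; 94]; [:: 176; 32; 44; 103];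
      [:: 176; 64; 76; 125]; [:: 176; 56; 77; 117]; [:: 177; 13; 25; 39]; [:: 177; 6; 55; 58];
      [:: 177; 87; 105; 125]; [:: 177; 20; 67; 102]; [:: 177; 43; 77; 96]; [:: 177; 29; 72; 118];
      [:: 178; 33; 59; 84]; [:: 178; 13; 82; 111]; [:: 178; 24; 53; 122]; [:: 178; 6; 73; 102];
      [:: 178; 38; 66; 97]; [:: 178; 20; 48; 113]; [:: 2; 15; 83; 121]; [:: 17; 30; 54; 97];
      [:: 0; 29; 65; 110]; [:: 39; 46; 59; 123]; [:: 13; 59; 70; 91]; [:: 23; 44; 72; 106];
      [:: 35; 81; 85; 102]; [:: 10; 52; 100; 113]; [:: 21; 66; 88; 118]].

Definition designs_14_6 : seq (nat * seq (seq nat)) :=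
  [:: (8, develop 84 14 base_6_8);
      (11, develop 84 14 base_6_11);
      (17, develop 84 14 base_6_17);
      (20, develop 84 14 base_6_20);
      (23, develop 84 14 base_6_23);
      (26, develop 84 14 base_6_26);
      (29, develop 84 14 base_6_29);
      (32, develop 84 7 base_6_32)].

Definition designs_14_9 : seq (nat * seq (seq nat)) :=
  [:: (11, map (map regroup) (develop 126 21 base_9_11));
      (17, develop 126 7 base_9_17);
      (20, develop 126 14 base_9_20);
      (23, develop 126 7 base_9_23);
      (26, develop 126 14 base_9_26);
      (29, develop 126 7 base_9_29);
      (32, develop 126 14 base_9_32);
      (38, develop 126 14 base_9_38);
      (41, develop 126 7 base_9_41);
      (44, develop 126 14 base_9_44);
      (47, develop 126 7 base_9_47);
      (50, develop 126 14 base_9_50);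
      (53, develop 126 7 base_9_53)].

Lemma designs_14_6_certified : all (fun d => gdd_certificate 14 6 d.1 d.2) designs_14_6.
Proof. by vm_compute. Qed.

Lemma designs_14_9_certified : all (fun d => gdd_certificate 14 9 d.1 d.2) designs_14_9.
Proof. by vm_compute. Qed.

Theorem lemma2p2 :
  (forall m, m \in [:: 8; 11; 17; 20; 23; 26; 29; 32] -> exists_kGDD_type 4 14 6 m) /\
  (forall m, m \in [:: 11; 17; 20; 23; 26; 29; 32; 38; 41; 44; 47; 50; 53] ->
     exists_kGDD_type 4 14 9 m).
Proof.
split.
  exact: exists_kGDD_types_of_certificates designs_14_6_certified.
exact: exists_kGDD_types_of_certificates designs_14_9_certified.
Qed.
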